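(* $\mathsf{RCA}_0$ proves: for every injective $f:\mathbb{N}\setminus\{0\}\to\mathbb{N}$, either the range of $f$ exists as a set, or every infinite subset of $T_f$ contains a sequence $(s^n)_{n\in\mathbb{N}}$ such that (a) the lengths $|s^n|$ are strictly increasing; (b) each $s^m$ is a weak extension of every $s^n$ with $n<m$; (c) $s^n<s^{n+1}$ holds for infinitely many $n$; (d) the sequence is strictly ascending in the Kleene–Brouwer order.
   Context: For injective $f:\mathbb{N}\setminus\{0\}\to\mathbb{N}$, $T_f\subseteq\mathbb{N}^*$ consists of the finite sequences $s$ such that (i) $f(s_i)=i$ for all $i<|s|$ with $s_i>0$, and (ii) for all $i<|s|$, if some $j<|s|$ has $f(j)=i$, then $s_i>0$. It is ordered by the Kleene–Brouwer order: $s<t$ iff either $|s|>|t|$ and $s_i=t_i$ for all $i<|t|$, or there is $i<\min(|s|,|t|)$ with $s_i<t_i$ and $s_j=t_j$ for all $j<i$. A sequence $t$ is a weak extension of $s$ if $|s|\le|t|$ and $s_i=t_i$ for every $i<|s|$ with $s_i>0$. *)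

(* "RCA_0 proves phi" is rendered semantically (by Goedel's
   completeness theorem, equivalently): phi holds in every L_2-structure
   (possibly nonstandard first-order part, arbitrary second-order part)
   satisfying the axioms of RCA_0. *)

Record L2str := {
  Num : Type;
  Set2 : Type;
  mem : Num -> Set2 -> Prop;
  zero : Num;
  one : Num;
  add : Num -> Num -> Num;
  mul : Num -> Num -> Num;
  lt : Num -> Num -> Prop
}.

(* ---------- syntax of L_2 formulas (number quantifiers only;
   free set variables act as set parameters) ---------- *)
Inductive term :=
| tvar (n : nat) | tzero | tone | tadd (a b : term) | tmul (a b : term).

Inductive form :=
| feq (a b : term) | flt (a b : term) | fmem (a : term) (X : nat)
| fnot (p : form) | fand (p q : form) | for_ (p q : form) | fimp (p q : form)
| fex (p : form) | fall (p : form)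
| fexb (t : term) (p : form)    (* exists x < t, p   (t read outside the binder) *)
| fallb (t : term) (p : form).

Definition scons {A : Type} (x : A) (e : nat -> A) : nat -> A :=
  fun n => match n with 0 => x | S k => e k end.

Section Sem.
Variable M : L2str.

Fixpoint teval (e : nat -> Num M) (t : term) : Num M :=
  match t with
  | tvar n => e n
  | tzero => zero M
  | tone => one M
  | tadd a b => add M (teval e a) (teval e b)
  | tmul a b => mul M (teval e a) (teval e b)
  end.

Fixpoint sat (e : nat -> Num M) (E : nat -> Set2 M) (p : form) : Prop :=
  match p with
  | feq a b => teval e a = teval e b
  | flt a b => lt M (teval e a) (teval e b)
  | fmem a X => mem M (teval e a) (E X)
  | fnot p => ~ sat e E p
  | fand p q => sat e E p /\ sat e E q
  | for_ p q => sat e E p \/ sat e E q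
  | fimp p q => sat e E p -> sat e E q
  | fex p => exists x, sat (scons x e) E p
  | fall p => forall x, sat (scons x e) E p
  | fexb t p => exists x, lt M x (teval e t) /\ sat (scons x e) E p
  | fallb t p => forall x, lt M x (teval e t) -> sat (scons x e) E p
  end.
End Sem.

Inductive Delta0 : form -> Prop :=
| D_eq a b : Delta0 (feq a b)
| D_lt a b : Delta0 (flt a b)
| D_mem a X : Delta0 (fmem a X)
| D_not p : Delta0 p -> Delta0 (fnot p)
| D_and p q : Delta0 p -> Delta0 q -> Delta0 (fand p q)
| D_or p q : Delta0 p -> Delta0 q -> Delta0 (for_ p q)
| D_imp p q : Delta0 p -> Delta0 q -> Delta0 (fimp p q)
| D_exb t p : Delta0 p -> Delta0 (fexb t p)
| D_allb t p : Delta0 p -> Delta0 (fallb t p).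

Definition Sigma01 (p : form) : Prop := exists q, Delta0 q /\ p = fex q.
Definition Pi01 (p : form) : Prop := exists q, Delta0 q /\ p = fall q.

Record RCA0 (M : L2str) : Prop := {
  ax_succ_ne0 : forall m, add M m (one M) <> zero M;
  ax_succ_inj : forall m n, add M m (one M) = add M n (one M) -> m = n;
  ax_add0 : forall m, add M m (zero M) = m;
  ax_addS : forall m n, add M m (add M n (one M)) = add M (add M m n) (one M);
  ax_mul0 : forall m, mul M m (zero M) = zero M;
  ax_mulS : forall m n, mul M m (add M n (one M)) = add M (mul M m n) m;
  ax_lt0 : forall m, ~ lt M m (zero M);
  ax_ltS : forall m n, lt M m (add M n (one M)) <-> (lt M m n \/ m = n);
  ax_ind : forall p, Sigma01 p -> forall e E,
      sat M (scons (zero M) e) E p ->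
      (forall n, sat M (scons n e) E p -> sat M (scons (add M n (one M)) e) E p) ->
      forall n, sat M (scons n e) E p;
  ax_comp : forall p q, Sigma01 p -> Pi01 q -> forall e E,
      (forall n, sat M (scons n e) E p <-> sat M (scons n e) E q) ->
      exists X : Set2 M, forall n, mem M n X <-> sat M (scons n e) E p
}.

Section Coding.
Variable M : L2str.
Local Notation N := (Num M).
Local Notation "x + y" := (add M x y).
Local Notation "x * y" := (mul M x y).
Local Notation "x < y" := (lt M x y).
Local Notation "0" := (zero M).
Local Notation "1" := (one M).
Definition le (x y : N) : Prop := x < y \/ x = y.

Definition pair (i j : N) : N := (i + j) * (i + j) + i.

Definition Rem (a m v : N) : Prop := v < m /\ exists q, a = q * m + v.

(* Goedel beta-function coding of finite sequences: the number
   pair l (pair a d) stands for the sequence of length l whose i-th entry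
   is  a mod (1 + (i+1) d). *)
Definition Len (c l : N) : Prop := exists a d, c = pair l (pair a d).
Definition Entry (c i v : N) : Prop :=
  exists l a d, c = pair l (pair a d) /\ i < l /\ Rem a (1 + (i + 1) * d) v.
Definition SameSeq (c c' : N) : Prop :=
  exists l, Len c l /\ Len c' l /\
    forall i v, i < l -> (Entry c i v <-> Entry c' i v).
(* canonical code: the least number coding the given sequence *)
Definition SeqCode (c : N) : Prop :=
  (exists l, Len c l) /\ forall c', c' < c -> ~ SameSeq c' c.

(* f : N \ {0} -> N, given as a set F of pairs (j, f(j)) *)
Definition InjFun (F : Set2 M) : Prop :=
  (forall x, mem M x F -> exists j i, j <> 0 /\ x = pair j i) /\
  (forall j, j <> 0 -> exists i, mem M (pair j i) F) /\
  (forall j i i', mem M (pair j i) F -> mem M (pair j i') F -> i = i') /\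
  (forall j j' i, mem M (pair j i) F -> mem M (pair j' i) F -> j = j').

Definition RangeExists (F : Set2 M) : Prop :=
  exists R : Set2 M, forall i, mem M i R <-> exists j, mem M (pair j i) F.

Definition InTf (F : Set2 M) (s : N) : Prop :=
  SeqCode s /\ exists l, Len s l /\
   (forall i v, i < l -> Entry s i v -> v <> 0 -> mem M (pair v i) F) /\
   (forall i, i < l -> (exists j, j < l /\ mem M (pair j i) F) ->
       forall v, Entry s i v -> v <> 0).

Definition KB (s t : N) : Prop :=
  exists ls lt_, Len s ls /\ Len t lt_ /\
  ( (lt_ < ls /\ forall i v, i < lt_ -> (Entry s i v <-> Entry t i v))
  \/ exists i, i < ls /\ i < lt_ /\
       (exists v w, Entry s i v /\ Entry t i w /\ v < w) /\
       (forall j v, j < i -> (Entry s j v <-> Entry t j v)) ).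

Definition WeakExt (s t : N) : Prop :=
  exists ls lt_, Len s ls /\ Len t lt_ /\ le ls lt_ /\
  forall i v, i < ls -> Entry s i v -> v <> 0 -> Entry t i v.

Definition Subset (X : Set2 M) (P : N -> Prop) : Prop :=
  forall x, mem M x X -> P x.
Definition Infinite (X : Set2 M) : Prop :=
  forall m, exists x, m < x /\ mem M x X.

(* Y codes a sequence n |-> s^n (a total function, as a set of pairs) *)
Definition IsSeqOfCodes (Y : Set2 M) : Prop :=
  (forall n, exists s, mem M (pair n s) Y) /\
  (forall n s s', mem M (pair n s) Y -> mem M (pair n s') Y -> s = s').

Definition GoodSeq (X Y : Set2 M) : Prop :=
  IsSeqOfCodes Y /\
  (forall n s, mem M (pair n s) Y -> mem M s X) /\
  (forall n m s t ls lt_, n < m -> mem M (pair n s) Y -> mem M (pair m t) Y ->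
      Len s ls -> Len t lt_ -> ls < lt_) /\
  (forall n m s t, n < m -> mem M (pair n s) Y -> mem M (pair m t) Y ->
      WeakExt s t) /\
  (forall k, exists n s t, k < n /\ mem M (pair n s) Y /\
      mem M (pair (n + 1) t) Y /\ KB s t) /\
  (forall n m s t, n < m -> mem M (pair n s) Y -> mem M (pair m t) Y -> KB s t).
End Coding.

(* If the range of f is not a set, then beyond every bound an infinite X
   included in T_f contains a sequence t with a zero at some position f(j):
   otherwise i would be in the range iff all long enough t in X satisfy
   t_i <> 0, a Delta^0_1 definition of the range.  Such a zero is only allowed
   because j >= |t|.  Iterating "take the least code <t, j> of such a pair
   with |t| above the previous code" yields s^0, s^1, ... such that for n < m
   the length of s^m exceeds both s^n and j_n.  Condition (ii) then makes s^m
   nonzero where s^n has its misplaced zero, and condition (i) together with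
   the injectivity of f makes s^m agree with s^n on the nonzero entries of
   s^n.  This gives the weak extensions, the growth of the lengths and
   s^n <_KB s^m. *)

From Stdlib Require Import Classical Setoid Morphisms Morphisms_Prop Ring.

(** * Renaming and the semantics of formulas *)

Definition lift_ren (r : nat -> nat) : nat -> nat :=
  fun k => match k with 0 => 0 | S k => S (r k) end.

Fixpoint tren (r : nat -> nat) (t : term) : term :=
  match t with
  | tvar n => tvar (r n)
  | tzero => tzero
  | tone => tone
  | tadd a b => tadd (tren r a) (tren r b)
  | tmul a b => tmul (tren r a) (tren r b)
  end.

Fixpoint fren (r : nat -> nat) (p : form) : form :=
  match p with
  | feq a b => feq (tren r a) (tren r b)
  | flt a b => flt (tren r a) (tren r b)
  | fmem a X => fmem (tren r a) X
  | fnot p => fnot (fren r p)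
  | fand p q => fand (fren r p) (fren r q)
  | for_ p q => for_ (fren r p) (fren r q)
  | fimp p q => fimp (fren r p) (fren r q)
  | fex p => fex (fren (lift_ren r) p)
  | fall p => fall (fren (lift_ren r) p)
  | fexb t p => fexb (tren r t) (fren (lift_ren r) p)
  | fallb t p => fallb (tren r t) (fren (lift_ren r) p)
  end.

Lemma Delta0_fren r p : Delta0 p -> Delta0 (fren r p).
Proof. intros H; revert r; induction H; intros; simpl; constructor; auto. Qed.

Lemma Sigma01_fex q : Delta0 q -> Sigma01 (fex q).
Proof. intros H; exists q; split; auto. Qed.

Lemma Pi01_fall q : Delta0 q -> Pi01 (fall q).
Proof. intros H; exists q; split; auto. Qed.

Section Semantics.
Variable M : L2str.

Lemma teval_tren e r t : teval M e (tren r t) = teval M (fun k => e (r k)) t.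
Proof. induction t; simpl; congruence. Qed.

Lemma teval_ext e e' t : (forall k, e k = e' k) -> teval M e t = teval M e' t.
Proof. intros H; induction t; simpl; congruence. Qed.

Lemma scons_ext {A : Type} (x : A) e e' :
  (forall k, e k = e' k) -> forall k, scons x e k = scons x e' k.
Proof. intros H [|k]; simpl; auto. Qed.

Lemma sat_ext p : forall e e' E, (forall k, e k = e' k) -> (sat M e E p <-> sat M e' E p).
Proof.
  induction p; simpl; intros e e' E H;
    rewrite ?(teval_ext e e' _ H); try reflexivity.
  - apply not_iff_morphism; auto.
  - apply and_iff_morphism; auto.
  - apply or_iff_morphism; auto.
  - apply iff_iff_iff_impl_morphism; auto.
  - apply ex_iff_morphism; intro x; apply IHp, scons_ext, H.
  - apply all_iff_morphism; intro x; apply IHp, scons_ext, H.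
  - apply ex_iff_morphism; intro x; apply and_iff_morphism; [reflexivity|].
    apply IHp, scons_ext, H.
  - apply all_iff_morphism; intro x; apply iff_iff_iff_impl_morphism; [reflexivity|].
    apply IHp, scons_ext, H.
Qed.

Lemma sat_fren p : forall r e E, sat M e E (fren r p) <-> sat M (fun k => e (r k)) E p.
Proof.
  induction p; simpl; intros r e E; rewrite ?teval_tren; try reflexivity.
  - apply not_iff_morphism; auto.
  - apply and_iff_morphism; auto.
  - apply or_iff_morphism; auto.
  - apply iff_iff_iff_impl_morphism; auto.
  - apply ex_iff_morphism; intro x; rewrite IHp; apply sat_ext; intros [|k]; reflexivity.
  - apply all_iff_morphism; intro x; rewrite IHp; apply sat_ext; intros [|k]; reflexivity.
  - apply ex_iff_morphism; intro x; apply and_iff_morphism; [reflexivity|].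
    rewrite IHp; apply sat_ext; intros [|k]; reflexivity.
  - apply all_iff_morphism; intro x; apply iff_iff_iff_impl_morphism; [reflexivity|].
    rewrite IHp; apply sat_ext; intros [|k]; reflexivity.
Qed.

Lemma sat_fren_ext p r e e' E : (forall k, e (r k) = e' k) ->
  (sat M e E (fren r p) <-> sat M e' E p).
Proof. intros H. rewrite sat_fren. apply sat_ext, H. Qed.

End Semantics.

(** * Formula builders *)

(* A formula under construction is a function of the number [d] of binders
   enclosing it, so that a bound variable can be named by the level of its
   binder: [lvar l] is the variable bound at level [l] (the outermost binder has
   level 0), while [lpar p] is entry [p] of the environment outside the formula. *)
Definition lterm := nat -> term.
Definition lform := nat -> form.

Definition lvar (l : nat) : lterm := fun d => tvar (d - l - 1).
Definition lpar (p : nat) : lterm := fun d => tvar (d + p).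
Definition lzero : lterm := fun _ => tzero.
Definition lone : lterm := fun _ => tone.
Definition ladd (a b : lterm) : lterm := fun d => tadd (a d) (b d).
Definition lmul (a b : lterm) : lterm := fun d => tmul (a d) (b d).
Definition lsucc (a : lterm) : lterm := ladd a lone.
Definition lpair (a b : lterm) : lterm := ladd (lmul (ladd a b) (ladd a b)) a.

Definition PEq (a b : lterm) : lform := fun d => feq (a d) (b d).
Definition PLt (a b : lterm) : lform := fun d => flt (a d) (b d).
Definition PLe (a b : lterm) : lform := fun d => for_ (flt (a d) (b d)) (feq (a d) (b d)).
Definition PMem (a : lterm) (X : nat) : lform := fun d => fmem (a d) X.
Definition PNot (p : lform) : lform := fun d => fnot (p d).
Definition PAnd (p q : lform) : lform := fun d => fand (p d) (q d).
Definition POr (p q : lform) : lform := fun d => for_ (p d) (q d).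
Definition PImp (p q : lform) : lform := fun d => fimp (p d) (q d).
Definition PEx (b : nat -> lform) : lform := fun d => fex (b d (S d)).
Definition PAll (b : nat -> lform) : lform := fun d => fall (b d (S d)).
Definition PExb (t : lterm) (b : nat -> lform) : lform := fun d => fexb (t d) (b d (S d)).
Definition PAllb (t : lterm) (b : nat -> lform) : lform := fun d => fallb (t d) (b d (S d)).

Create HintDb builders.
#[global] Hint Unfold lvar lpar lzero lone ladd lmul lsucc lpair
  PEq PLt PLe PMem PNot PAnd POr PImp PEx PAll PExb PAllb : builders.

Ltac unfold_builders := autounfold with builders; cbv beta; simpl.

Ltac solve_Delta0 :=
  unfold_builders; repeat (constructor || apply Delta0_fren || assumption).

(* Proves [P <-> sat M e E p] when [P] is [p] read in the model, up to the
   environment bookkeeping of formulas embedded by renaming. *)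
Ltac sat_congr := first
  [ reflexivity
  | apply sat_fren_ext; intros [|[|?]]; reflexivity
  | symmetry; apply sat_fren_ext; intros [|[|?]]; reflexivity
  | apply ex_iff_morphism; intro; sat_congr
  | apply all_iff_morphism; intro; sat_congr
  | apply and_iff_morphism; sat_congr
  | apply or_iff_morphism; sat_congr
  | apply iff_iff_iff_impl_morphism; sat_congr
  | apply not_iff_morphism; sat_congr ].

Section Principles.
Variable M : L2str.
Hypothesis HM : RCA0 M.

Lemma Sigma01_induction p e E (P : Num M -> Prop) : Sigma01 p ->
  (forall n, P n <-> sat M (scons n e) E p) ->
  P (zero M) -> (forall n, P n -> P (add M n (one M))) -> forall n, P n.
Proof.
  intros Hp HP H0 HS n. apply HP.
  apply (ax_ind M HM p Hp e E); [apply HP; auto|].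
  intros m Hm. apply HP, HS, HP, Hm.
Qed.

Lemma Delta0_induction p e E (P : Num M -> Prop) : Delta0 p ->
  (forall n, P n <-> sat M (scons n e) E p) ->
  P (zero M) -> (forall n, P n -> P (add M n (one M))) -> forall n, P n.
Proof.
  intros Hp HP. apply (Sigma01_induction (fex (fren S p)) e E P).
  - apply Sigma01_fex, Delta0_fren, Hp.
  - intro n. rewrite HP. simpl. split.
    + intro H. exists (zero M). rewrite sat_fren. exact H.
    + intros [x H]. rewrite sat_fren in H. exact H.
Qed.

Lemma Delta01_comprehension p q e E (P : Num M -> Prop) : Sigma01 p -> Pi01 q ->
  (forall n, P n <-> sat M (scons n e) E p) ->
  (forall n, P n <-> sat M (scons n e) E q) ->
  exists X, forall n, mem M n X <-> P n.
Proof.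
  intros Hp Hq H1 H2.
  destruct (ax_comp M HM p q Hp Hq e E) as [X HX].
  - intro n. rewrite <- H1, <- H2. reflexivity.
  - exists X. intro n. rewrite HX, H1. reflexivity.
Qed.

End Principles.

(** * Arithmetic in a model of RCA_0 *)

Section Model.
Variable M : L2str.
Hypothesis HM : RCA0 M.
(* Every instance of induction is relative to an assignment of the set
   variables, so the second-order part has to be inhabited; [W] is any set. *)
Variable W : Set2 M.

Local Notation N := (Num M).
Local Notation "x + y" := (add M x y).
Local Notation "x * y" := (mul M x y).
Local Notation "x < y" := (lt M x y).
Local Notation "x <= y" := (le M x y).
Local Notation o0 := (zero M).
Local Notation o1 := (one M).
Local Notation "x .+1" := (add M x (one M)) (at level 2, left associativity, format "x .+1").

Let E0 : nat -> Set2 M := fun _ => W.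
Let e0 : nat -> N := fun _ => o0.

Ltac induction_Delta0_in p e E :=
  lazymatch goal with |- forall n, @?P n => apply (Delta0_induction M HM p e E P) end.
Ltac induction_Sigma01_in p e E :=
  lazymatch goal with |- forall n, @?P n => apply (Sigma01_induction M HM p e E P) end.
Ltac induction_Delta0 p e :=
  induction_Delta0_in (p O) e E0; [solve_Delta0 | intros; reflexivity | | ].
Ltac induction_Sigma01 p e :=
  induction_Sigma01_in (p O) e E0;
    [apply Sigma01_fex; solve_Delta0 | intros; unfold_builders; sat_congr | | ].

Lemma add_0_l n : o0 + n = n.
Proof.
  revert n; induction_Delta0 (PEq (ladd lzero (lpar 0)) (lpar 0)) e0.
  - apply (ax_add0 M HM).
  - intros n H. rewrite (ax_addS M HM), H. reflexivity.
Qed.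

Lemma add_succ_l m n : m.+1 + n = (m + n).+1.
Proof.
  revert n; induction_Delta0 (PEq (ladd (lsucc (lpar 1)) (lpar 0)) (lsucc (ladd (lpar 1) (lpar 0))))
    (scons m e0).
  - rewrite !(ax_add0 M HM). reflexivity.
  - intros n H. rewrite !(ax_addS M HM), H. reflexivity.
Qed.

Lemma add_comm m n : m + n = n + m.
Proof.
  revert n; induction_Delta0 (PEq (ladd (lpar 1) (lpar 0)) (ladd (lpar 0) (lpar 1))) (scons m e0).
  - rewrite (ax_add0 M HM), add_0_l. reflexivity.
  - intros n H. rewrite (ax_addS M HM), add_succ_l, H. reflexivity.
Qed.

Lemma add_assoc m n k : m + (n + k) = (m + n) + k.
Proof.
  revert k; induction_Delta0
    (PEq (ladd (lpar 1) (ladd (lpar 2) (lpar 0))) (ladd (ladd (lpar 1) (lpar 2)) (lpar 0)))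
    (scons m (scons n e0)).
  - rewrite !(ax_add0 M HM). reflexivity.
  - intros k H. rewrite !(ax_addS M HM), H. reflexivity.
Qed.

Lemma mul_0_l n : o0 * n = o0.
Proof.
  revert n; induction_Delta0 (PEq (lmul lzero (lpar 0)) lzero) e0.
  - apply (ax_mul0 M HM).
  - intros n H. rewrite (ax_mulS M HM), H, (ax_add0 M HM). reflexivity.
Qed.

Lemma mul_succ_l m n : m.+1 * n = m * n + n.
Proof.
  revert n; induction_Delta0
    (PEq (lmul (lsucc (lpar 1)) (lpar 0)) (ladd (lmul (lpar 1) (lpar 0)) (lpar 0))) (scons m e0).
  - rewrite !(ax_mul0 M HM), (ax_add0 M HM). reflexivity.
  - intros n H. rewrite !(ax_mulS M HM), H, <- !add_assoc, !(add_assoc _ _ o1), (add_comm n m).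
    reflexivity.
Qed.

Lemma mul_comm m n : m * n = n * m.
Proof.
  revert n; induction_Delta0 (PEq (lmul (lpar 1) (lpar 0)) (lmul (lpar 0) (lpar 1))) (scons m e0).
  - rewrite (ax_mul0 M HM), mul_0_l. reflexivity.
  - intros n H. rewrite (ax_mulS M HM), mul_succ_l, H. reflexivity.
Qed.

Lemma mul_add_distr_l m n k : m * (n + k) = m * n + m * k.
Proof.
  revert k; induction_Delta0
    (PEq (lmul (lpar 1) (ladd (lpar 2) (lpar 0))) (ladd (lmul (lpar 1) (lpar 2)) (lmul (lpar 1) (lpar 0))))
    (scons m (scons n e0)).
  - rewrite (ax_add0 M HM), (ax_mul0 M HM), (ax_add0 M HM). reflexivity.
  - intros k H. rewrite (ax_addS M HM), !(ax_mulS M HM), H, add_assoc. reflexivity.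
Qed.

Lemma mul_assoc m n k : m * (n * k) = (m * n) * k.
Proof.
  revert k; induction_Delta0
    (PEq (lmul (lpar 1) (lmul (lpar 2) (lpar 0))) (lmul (lmul (lpar 1) (lpar 2)) (lpar 0)))
    (scons m (scons n e0)).
  - rewrite !(ax_mul0 M HM). reflexivity.
  - intros k H. rewrite !(ax_mulS M HM), mul_add_distr_l, H. reflexivity.
Qed.

Lemma mul_1_l n : o1 * n = n.
Proof. rewrite <- (add_0_l o1), mul_succ_l, mul_0_l, add_0_l. reflexivity. Qed.

Lemma mul_add_distr_r n m p : (n + m) * p = n * p + m * p.
Proof. rewrite !(mul_comm _ p). apply mul_add_distr_l. Qed.

Definition model_semiring : semi_ring_theory o0 o1 (add M) (mul M) eq :=
  mk_srt _ _ _ _ _ add_0_l add_comm add_assoc mul_1_l mul_0_l mul_comm mul_assoc mul_add_distr_r.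
Add Ring model_ring : model_semiring.

Lemma succ_neq_0 x : x.+1 <> o0.
Proof. apply (ax_succ_ne0 M HM). Qed.

Lemma nlt_0_r x : ~ x < o0.
Proof. apply (ax_lt0 M HM). Qed.

Lemma lt_succ_r_or m n : m < n.+1 <-> m < n \/ m = n.
Proof. apply (ax_ltS M HM). Qed.

Lemma add_cancel_r m n k : m + k = n + k -> m = n.
Proof.
  revert k; induction_Delta0
    (PImp (PEq (ladd (lpar 1) (lpar 0)) (ladd (lpar 2) (lpar 0))) (PEq (lpar 1) (lpar 2)))
    (scons m (scons n e0)).
  - rewrite !(ax_add0 M HM). auto.
  - intros k H Hk. apply H, (ax_succ_inj M HM). rewrite <- !(ax_addS M HM). exact Hk.
Qed.

Lemma add_cancel_l m n k : k + m = k + n -> m = n.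
Proof. rewrite (add_comm k m), (add_comm k n). apply add_cancel_r. Qed.

Lemma zero_or_succ n : n = o0 \/ exists p, n = p.+1.
Proof.
  assert (H : forall k, exists p, k = o0 \/ k = p.+1).
  { induction_Sigma01 (PEx (fun p => POr (PEq (lpar 0) lzero) (PEq (lpar 0) (lsucc (lvar p))))) e0.
    - exists o0; auto.
    - intros k _. exists k; auto. }
  destruct (H n) as [p [Hp|Hp]]; eauto.
Qed.

Lemma neq_0_succ k : k <> o0 -> exists p, k = p.+1.
Proof. intros H. destruct (zero_or_succ k) as [->|Hk]; tauto. Qed.

Lemma lt_add_succ x z : x < (x + z).+1.
Proof.
  revert z; induction_Delta0 (PLt (lpar 1) (lsucc (ladd (lpar 1) (lpar 0)))) (scons x e0).
  - rewrite (ax_add0 M HM). apply lt_succ_r_or. auto.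
  - intros z H. rewrite (ax_addS M HM). apply lt_succ_r_or. auto.
Qed.

Lemma lt_iff_add x y : x < y <-> exists z, y = (x + z).+1.
Proof.
  split; [|intros [z ->]; apply lt_add_succ].
  revert y.
  assert (H : forall y, exists z, x < y -> y = (x + z).+1).
  { induction_Sigma01 (PEx (fun z => PImp (PLt (lpar 1) (lpar 0))
                                         (PEq (lpar 0) (lsucc (ladd (lpar 1) (lvar z))))))
      (scons x e0).
    - exists o0. intro H. exfalso. apply (nlt_0_r x H).
    - intros y [z Hz]. destruct (classic (x < y)) as [Hl|Hl].
      + exists z.+1. intros _. rewrite (Hz Hl). ring.
      + exists o0. intro H. apply lt_succ_r_or in H. destruct H as [H| ->]; [tauto|]. ring. }
  intros y Hy. destruct (H y) as [z Hz]. eauto.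
Qed.

Lemma le_iff_add x y : x <= y <-> exists z, y = x + z.
Proof.
  split.
  - intros [H| ->].
    + apply lt_iff_add in H. destruct H as [z ->]. exists z.+1. ring.
    + exists o0. ring.
  - intros [z ->]. destruct (zero_or_succ z) as [->|[p ->]].
    + right. ring.
    + left. apply lt_iff_add. exists p. ring.
Qed.

Lemma le_add_r x k : x <= x + k.
Proof. apply le_iff_add. eauto. Qed.

Lemma le_add_l x k : x <= k + x.
Proof. rewrite add_comm. apply le_add_r. Qed.

Lemma lt_irrefl x : ~ x < x.
Proof.
  intros H. apply lt_iff_add in H. destruct H as [z H].
  apply (succ_neq_0 z), (add_cancel_l _ _ x). rewrite (ax_add0 M HM), add_assoc. auto.
Qed.

Lemma lt_trans x y z : x < y -> y < z -> x < z.
Proof.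
  rewrite !lt_iff_add. intros [a ->] [b ->]. exists (a + b).+1. ring.
Qed.

Lemma lt_succ_diag_r x : x < x.+1.
Proof. apply lt_succ_r_or. auto. Qed.

Lemma lt_0_succ x : o0 < x.+1.
Proof. apply lt_iff_add. exists x. ring. Qed.

Lemma le_0_l x : o0 <= x.
Proof. apply le_iff_add. exists x. ring. Qed.

Lemma le_refl x : x <= x.
Proof. right; auto. Qed.

Lemma lt_le_incl x y : x < y -> x <= y.
Proof. left; auto. Qed.

Lemma le_succ_l x y : x < y <-> x.+1 <= y.
Proof. rewrite lt_iff_add, le_iff_add. split; intros [z ->]; exists z; ring. Qed.

Lemma lt_succ_r x y : x < y.+1 <-> x <= y.
Proof. rewrite lt_succ_r_or. reflexivity. Qed.

Lemma le_trans x y z : x <= y -> y <= z -> x <= z.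
Proof. rewrite !le_iff_add. intros [a ->] [b ->]. exists (a + b). ring. Qed.

Lemma le_lt_trans x y z : x <= y -> y < z -> x < z.
Proof. intros [H| ->] H2; auto. eapply lt_trans; eauto. Qed.

Lemma lt_le_trans x y z : x < y -> y <= z -> x < z.
Proof. intros H [H2| ->]; auto. eapply lt_trans; eauto. Qed.

Lemma lt_trichotomy x y : x < y \/ x = y \/ y < x.
Proof.
  revert y; induction_Delta0
    (POr (PLt (lpar 1) (lpar 0)) (POr (PEq (lpar 1) (lpar 0)) (PLt (lpar 0) (lpar 1)))) (scons x e0).
  - destruct (le_0_l x) as [H|H]; auto.
  - intros y [H|[H|H]].
    + left. eapply lt_trans; eauto. apply lt_succ_diag_r.
    + left. subst. apply lt_succ_diag_r.
    + apply le_succ_l in H. destruct H as [H|H]; auto.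
Qed.

Lemma lt_nle x y : x < y -> ~ y <= x.
Proof. intros H H'. apply (lt_irrefl x). eapply lt_le_trans; eauto. Qed.

Lemma le_nlt x y : x <= y -> ~ y < x.
Proof. intros H H'. eapply lt_nle; eauto. Qed.

Lemma nlt_le x y : ~ x < y -> y <= x.
Proof. intros H. destruct (lt_trichotomy x y) as [H1|[H1|H1]]; [tauto|right; auto|left; auto]. Qed.

Lemma lt_neq x y : x < y -> x <> y.
Proof. intros H ->. apply (lt_irrefl y H). Qed.

Lemma neq_0_lt_0 x : x <> o0 -> o0 < x.
Proof. intros H. apply neq_0_succ in H. destruct H as [p ->]. apply lt_0_succ. Qed.

Lemma lt_succ_cancel x y : x.+1 < y.+1 -> x < y.
Proof. rewrite lt_succ_r. apply le_succ_l. Qed.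

Lemma add_lt_mono_r x y k : x < y -> x + k < y + k.
Proof. rewrite !lt_iff_add. intros [z ->]. exists z. ring. Qed.

Lemma add_le_mono x y a b : x <= y -> a <= b -> x + a <= y + b.
Proof. rewrite !le_iff_add. intros [z ->] [w ->]. exists (z + w). ring. Qed.

Lemma mul_le_mono_r x y k : x <= y -> x * k <= y * k.
Proof. rewrite !le_iff_add. intros [z ->]. exists (z * k). ring. Qed.

Lemma mul_le_mono x y a b : x <= y -> a <= b -> x * a <= y * b.
Proof.
  rewrite !le_iff_add. intros [z ->] [w ->]. exists (x * w + z * a + z * w). ring.
Qed.

Lemma le_mul_r x k : k <> o0 -> x <= x * k.
Proof. intros Hk. apply neq_0_succ in Hk. destruct Hk as [p ->]. apply le_iff_add. exists (x * p). ring. Qed.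

Lemma le_mul_l x k : k <> o0 -> x <= k * x.
Proof. rewrite mul_comm. apply le_mul_r. Qed.

Lemma one_neq_0 : o1 <> o0.
Proof. rewrite <- (add_0_l o1). apply succ_neq_0. Qed.

Lemma mul_neq_0 a b : a <> o0 -> b <> o0 -> a * b <> o0.
Proof.
  intros Ha Hb. apply neq_0_succ in Ha; apply neq_0_succ in Hb.
  destruct Ha as [p ->]; destruct Hb as [q ->].
  replace (p.+1 * q.+1) with (p * q + p + q).+1 by ring. apply succ_neq_0.
Qed.

Lemma least_Delta0 q e E : Delta0 q -> (exists x, sat M (scons x e) E q) ->
  exists x, sat M (scons x e) E q /\ forall y, y < x -> ~ sat M (scons y e) E q.
Proof.
  intros Hq [x Hx]. apply NNPP; intro Hn.
  assert (K : forall k y, y < k -> ~ sat M (scons y e) E q).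
  { apply (Delta0_induction M HM (fallb (tvar 0) (fnot (fren (lift_ren S) q))) e E
             (fun k => forall y, y < k -> ~ sat M (scons y e) E q)).
    - repeat constructor. apply Delta0_fren, Hq.
    - intro k. simpl. apply all_iff_morphism; intro y.
      apply iff_iff_iff_impl_morphism; [reflexivity|].
      apply not_iff_morphism. symmetry. apply sat_fren_ext. intros [|j]; reflexivity.
    - intros y Hy. exfalso. apply (nlt_0_r y Hy).
    - intros k H y Hy. apply lt_succ_r_or in Hy. destruct Hy as [Hy| ->]; auto.
      intro Hk. apply Hn. eauto. }
  exact (K x.+1 x (lt_succ_diag_r x) Hx).
Qed.

(** * Division, pairing and sequence codes *)

Lemma div_exists m a : m <> o0 -> exists q r, r < m /\ a = q * m + r.
Proof.
  intros Hm. revert a.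
  induction_Sigma01 (PEx (fun q => PExb (lpar 1) (fun r =>
                       PEq (lpar 0) (ladd (lmul (lvar q) (lpar 1)) (lvar r))))) (scons m e0).
  - exists o0, o0. split; [apply neq_0_lt_0, Hm | ring].
  - intros a [q [r [Hr ->]]]. apply le_succ_l in Hr. destruct Hr as [Hr|Hr].
    + exists q, r.+1. split; [exact Hr | ring].
    + exists q.+1, o0. split; [apply neq_0_lt_0, Hm|]. rewrite <- Hr. ring.
Qed.

Lemma div_unique m q r q' r' : r < m -> r' < m -> q * m + r = q' * m + r' -> q = q' /\ r = r'.
Proof.
  assert (Hlt : forall q r q' r', r < m -> q * m + r = q' * m + r' -> ~ q < q').
  { intros q0 r0 q0' r0' Hr E Hq. apply lt_iff_add in Hq. destruct Hq as [z ->].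
    apply (lt_nle _ _ Hr). apply le_iff_add. exists (z * m + r0').
    apply (add_cancel_l _ _ (q0 * m)). rewrite E. ring. }
  intros Hr Hr' E.
  destruct (lt_trichotomy q q') as [H|[->|H]].
  - exfalso. exact (Hlt q r q' r' Hr E H).
  - split; auto. eapply add_cancel_l; eauto.
  - exfalso. exact (Hlt q' r' q r Hr' (eq_sym E) H).
Qed.

Lemma Rem_exists a m : m <> o0 -> exists v, Rem M a m v.
Proof. intros Hm. destruct (div_exists m a Hm) as [q [r [Hr E]]]. exists r. split; eauto. Qed.

Lemma Rem_unique a m v v' : Rem M a m v -> Rem M a m v' -> v = v'.
Proof. intros [H1 [q E1]] [H2 [q' E2]]. rewrite E1 in E2. eapply div_unique; eauto. Qed.

Lemma Rem_le a m v : Rem M a m v -> v <= a.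
Proof. intros [_ [q ->]]. apply le_add_l. Qed.

Lemma Rem_add_mul a m v k : Rem M a m v -> Rem M (a + k * m) m v.
Proof. intros [H [q ->]]. split; auto. exists (q + k). ring. Qed.

Lemma Rem_add_mul_inv a m v k : Rem M (a + k * m) m v -> Rem M a m v.
Proof.
  intros H. assert (Hm : m <> o0) by (intros ->; destruct H as [H _]; exact (nlt_0_r v H)).
  destruct (Rem_exists a m Hm) as [v' H'].
  rewrite (Rem_unique _ _ _ _ H (Rem_add_mul _ _ _ k H')). exact H'.
Qed.

Lemma Rem_small v m : v < m -> Rem M v m v.
Proof. intros H. split; auto. exists o0. ring. Qed.

Lemma pair_lt i j i' j' : i + j < i' + j' -> pair M i j < pair M i' j'.
Proof.
  intros H. apply lt_iff_add in H. destruct H as [z E]. unfold pair. rewrite E.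
  apply lt_iff_add.
  exists (i + (o1 + o1) * j + (o1 + o1) * (i + j) * z + z * z + (o1 + o1) * z + i'). ring.
Qed.

Lemma pair_inj i j i' j' : pair M i j = pair M i' j' -> i = i' /\ j = j'.
Proof.
  intros E. destruct (lt_trichotomy (i + j) (i' + j')) as [H|[H|H]].
  - apply pair_lt in H. rewrite E in H. destruct (lt_irrefl _ H).
  - unfold pair in E. rewrite H in E. apply add_cancel_l in E. subst i'. split; auto.
    eapply add_cancel_l; eauto.
  - apply pair_lt in H. rewrite E in H. destruct (lt_irrefl _ H).
Qed.

Lemma pair_ge_l i j : i <= pair M i j.
Proof. apply le_add_l. Qed.

Lemma pair_ge_r i j : j <= pair M i j.
Proof.
  unfold pair. apply (le_trans _ (i + j)); [apply le_add_l|].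
  apply (le_trans _ ((i + j) * (i + j))); [|apply le_add_r].
  destruct (zero_or_succ (i + j)) as [->|[p ->]]; [right; ring | apply le_mul_r, succ_neq_0].
Qed.

Lemma pair_le_mono i j i' j' : i <= i' -> j <= j' -> pair M i j <= pair M i' j'.
Proof.
  intros Hi Hj. assert (Hs : i + j <= i' + j') by (apply add_le_mono; auto).
  apply add_le_mono; auto. apply mul_le_mono; auto.
Qed.

(* The moduli of the beta function: entry [i] of the code [pair l (pair a d)]
   is [a] modulo [beta_mod d i]. *)
Definition beta_mod (d i : N) : N := o1 + i.+1 * d.

Lemma beta_mod_neq_0 d i : beta_mod d i <> o0.
Proof. unfold beta_mod. rewrite add_comm. apply succ_neq_0. Qed.

Lemma Entry_pair c l a d i v : c = pair M l (pair M a d) ->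
  (Entry M c i v <-> i < l /\ Rem M a (beta_mod d i) v).
Proof.
  intros ->. split.
  - intros [l' [a' [d' [E H]]]]. apply pair_inj in E. destruct E as [<- E].
    apply pair_inj in E. destruct E as [<- <-]. exact H.
  - intros H. exists l, a, d. auto.
Qed.

Lemma Len_unique c l l' : Len M c l -> Len M c l' -> l = l'.
Proof. intros [a [d ->]] [a' [d' E]]. apply pair_inj in E. tauto. Qed.

Lemma Len_le c l : Len M c l -> l <= c.
Proof. intros [a [d ->]]. apply pair_ge_l. Qed.

Lemma Entry_fun c i v v' : Entry M c i v -> Entry M c i v' -> v = v'.
Proof.
  intros [l [a [d [E [_ H]]]]] H'. rewrite (Entry_pair c l a d i v' E) in H'.
  destruct H'. eapply Rem_unique; eauto.
Qed.

Lemma Entry_exists c l i : Len M c l -> i < l -> exists v, Entry M c i v.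
Proof.
  intros [a [d E]] Hi. destruct (Rem_exists a (beta_mod d i) (beta_mod_neq_0 d i)) as [v Hv].
  exists v. rewrite (Entry_pair c l a d i v E). auto.
Qed.

Lemma Entry_le c i v : Entry M c i v -> v <= c.
Proof.
  intros [l [a [d [-> [_ H]]]]]. apply (le_trans _ a); [eapply Rem_le; eauto|].
  apply (le_trans _ (pair M a d)); [apply pair_ge_l | apply pair_ge_r].
Qed.

(** * Coding finite functions: the Chinese remainder theorem *)

(* [Rem] hides an unbounded quantifier; [RemB] is the bounded form that is
   definable by a [Delta0] formula. *)
Definition RemB (a m v : N) : Prop := v < m /\ exists q, q < a.+1 /\ a = q * m + v.

Lemma RemB_iff a m v : RemB a m v <-> Rem M a m v.
Proof.
  split.
  - intros [H [q [_ E]]]. split; eauto.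
  - intros [H [q E]]. split; auto. exists q. split; auto. apply lt_succ_r.
    rewrite E. apply (le_trans _ (q * m)); [|apply le_add_r].
    apply le_mul_r. intros ->. exact (nlt_0_r v H).
Qed.

Definition lbeta_mod (d i : lterm) : lterm := ladd lone (lmul (lsucc i) d).
Definition RemP (a m v : lterm) : lform :=
  PAnd (PLt v m) (PExb (lsucc a) (fun q => PEq a (ladd (lmul (lvar q) m) v))).
#[local] Hint Unfold lbeta_mod RemP : builders.

Lemma exists_common_multiple n : exists D, D <> o0 /\
  forall k, k < n.+1 -> o0 < k -> exists t, t < D.+1 /\ D = k * t.
Proof.
  revert n.
  induction_Sigma01 (PEx (fun D => PAnd (PNot (PEq (lvar D) lzero))
    (PAllb (lsucc (lpar 0)) (fun k => PImp (PLt lzero (lvar k))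
      (PExb (lsucc (lvar D)) (fun t => PEq (lvar D) (lmul (lvar k) (lvar t)))))))) e0.
  - exists o1. split; [apply one_neq_0|]. intros k Hk Hk0. exfalso.
    rewrite lt_succ_r in Hk. exact (le_nlt _ _ Hk Hk0).
  - intros n [D [HD H]]. exists (D * n.+1). split; [apply mul_neq_0; auto; apply succ_neq_0|].
    intros k Hk Hk0. apply lt_succ_r_or in Hk. destruct Hk as [Hk| ->].
    + destruct (H k Hk Hk0) as [t [_ Et]]. exists (t * n.+1). split; [|rewrite Et; ring].
      apply lt_succ_r, mul_le_mono_r. rewrite Et. apply le_mul_l.
      intros ->. exact (lt_irrefl _ Hk0).
    + exists D. split; [|ring]. apply lt_succ_r. apply le_mul_r, succ_neq_0.
Qed.

Lemma exists_multiple_of_beta_mods D n : exists Q, Q <> o0 /\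
  forall i, i < n -> exists t, t < Q.+1 /\ Q = beta_mod D i * t.
Proof.
  revert n.
  induction_Sigma01 (PEx (fun Q => PAnd (PNot (PEq (lvar Q) lzero))
    (PAllb (lpar 0) (fun i => PExb (lsucc (lvar Q)) (fun t =>
       PEq (lvar Q) (lmul (lbeta_mod (lpar 1) (lvar i)) (lvar t))))))) (scons D e0).
  - exists o1. split; [apply one_neq_0|]. intros i Hi. destruct (nlt_0_r i Hi).
  - intros n [Q [HQ H]]. exists (Q * beta_mod D n).
    split; [apply mul_neq_0; [exact HQ | apply beta_mod_neq_0]|].
    intros i Hi. apply lt_succ_r_or in Hi. destruct Hi as [Hi| ->].
    + destruct (H i Hi) as [t [_ Et]]. exists (t * beta_mod D n). split; [|rewrite Et; ring].
      apply lt_succ_r. rewrite Et, <- mul_assoc. apply le_mul_l, beta_mod_neq_0.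
    + exists Q. split; [|ring]. apply lt_succ_r, le_mul_r, beta_mod_neq_0.
Qed.

Lemma one_lt_beta_mod D i : D <> o0 -> o1 < beta_mod D i.
Proof.
  intros HD. destruct (neq_0_succ D HD) as [p ->]. unfold beta_mod.
  apply lt_iff_add. exists (i.+1 * p + i). ring.
Qed.

Lemma beta_mod_inverse D i j : D <> o0 -> i < j ->
  (forall k, o0 < k -> k <= j -> exists t, D = k * t) ->
  exists u, Rem M (beta_mod D i * u) (beta_mod D j) o1.
Proof.
  intros HD Hij Hdiv. apply lt_iff_add in Hij. destruct Hij as [k0 ->].
  destruct (Hdiv k0.+1) as [e ->]; [apply lt_0_succ | apply le_iff_add; exists i; ring|].
  assert (He : e <> o0) by (intros ->; apply HD; ring).
  destruct (neq_0_succ e He) as [e' ->].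
  (* An explicit inverse, found by expanding the product with [D = (j - i) e]. *)
  set (J := (i + k0).+1.+1).
  set (y := e'.+1 * J * i.+1 + o1).
  exists (e'.+1 * J * J * (J * (k0.+1 * e'.+1))). split.
  - apply one_lt_beta_mod, HD.
  - exists (y * J * k0.+1 * e' + y * J * k0 + y * (i + k0).+1 + e'.+1 * J * i.+1).
    unfold beta_mod, y, J. ring.
Qed.

Lemma Rem_one_mul P Q u u' m : Rem M (P * u) m o1 -> Rem M (Q * u') m o1 ->
  Rem M ((P * Q) * (u * u')) m o1.
Proof.
  intros [H1 [a Ea]] [_ [b Eb]]. split; auto. exists (a * b * m + a + b).
  transitivity ((P * u) * (Q * u')); [ring|]. rewrite Ea, Eb. ring.
Qed.

Lemma Rem_one_reduce P u m : Rem M (P * u) m o1 -> exists u', u' < m /\ Rem M (P * u') m o1.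
Proof.
  intros H. assert (Hm : m <> o0) by (intros ->; destruct H as [H _]; exact (nlt_0_r _ H)).
  destruct (div_exists m u Hm) as [q [r [Hr ->]]]. exists r. split; auto.
  apply (Rem_add_mul_inv _ _ _ (P * q)). replace (P * r + P * q * m) with (P * (q * m + r)) by ring.
  exact H.
Qed.

(* [g] with its variables 0 and 1 read as the variables bound at levels [lv]
   and [li], and its remaining variables read [off] places into the parameters. *)
Definition lembed (g : form) (li lv off : nat) : lform := fun d =>
  fren (fun x => match x with 0 => d - lv - 1 | 1 => d - li - 1 | S (S j) => Nat.add (Nat.add d off) j end) g.
#[local] Hint Unfold lembed : builders.

Section ChineseRemainder.
Variables (n D V : N) (g : form) (eG : nat -> N) (E : nat -> Set2 M).
Hypothesis Hg : Delta0 g.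
Let G i v := sat M (scons v (scons i eG)) E g.
Hypothesis HD : D <> o0.
Hypothesis Hdiv : forall k, o0 < k -> k <= n -> exists t, D = k * t.
Hypothesis HV : V <= D.
Hypothesis Htot : forall i, i < n -> exists v, v < V /\ G i v.

(* After [k] steps, [a] solves the first [k] congruences, and the product [P]
   of their moduli is invertible modulo each of the remaining ones. *)
Definition crt_invariant (k a P : N) : Prop :=
  P <> o0 /\
  (forall i, i < k -> i < n -> exists v, v < V /\ (G i v /\ RemB a (beta_mod D i) v)) /\
  (forall i, i < k -> i < n -> exists t, t < P.+1 /\ P = beta_mod D i * t) /\
  (forall j, j < n -> k <= j -> exists u, u < beta_mod D j /\ RemB (P * u) (beta_mod D j) o1).

Lemma crt_invariant_0 : crt_invariant o0 o0 o1.
Proof.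
  assert (Hm : forall j, o1 < beta_mod D j) by (intros; apply one_lt_beta_mod, HD).
  split; [apply one_neq_0|]. split; [|split].
  - intros i Hi. destruct (nlt_0_r i Hi).
  - intros i Hi. destruct (nlt_0_r i Hi).
  - intros j _ _. exists o1. split; [apply Hm|]. apply RemB_iff.
    replace (o1 * o1) with o1 by ring. apply Rem_small, Hm.
Qed.

Lemma crt_invariant_succ k a P : k < n -> crt_invariant k a P ->
  exists a' P', crt_invariant k.+1 a' P'.
Proof.
  intros Hkn [HP0 [H1 [H2 H3]]].
  destruct (H3 k Hkn (le_refl k)) as [u0 [_ Ru0]]. apply RemB_iff in Ru0.
  destruct Ru0 as [_ [q0 Eq0]].
  destruct (Htot k Hkn) as [v [HvV Gv]].
  set (a' := a + P * u0 * (v + k.+1 * D * a)). set (P' := P * beta_mod D k).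
  assert (HvM : forall i, v < beta_mod D i).
  { intro i. apply (lt_le_trans _ _ _ HvV), (le_trans _ _ _ HV), (le_trans _ (i.+1 * D)).
    - apply le_mul_l, succ_neq_0.
    - apply le_add_l. }
  exists a', P'. split; [apply mul_neq_0; [exact HP0 | apply beta_mod_neq_0]|]. split; [|split].
  - intros i Hi Hin. apply lt_succ_r_or in Hi. destruct Hi as [Hi| ->].
    + destruct (H1 i Hi Hin) as [vi [HviV [Gi Ri]]]. exists vi. do 2 (split; auto).
      apply RemB_iff. apply RemB_iff in Ri. destruct (H2 i Hi Hin) as [t [_ Et]].
      replace a' with (a + (t * u0 * (v + k.+1 * D * a)) * beta_mod D i)
        by (unfold a'; rewrite Et; ring).
      apply Rem_add_mul, Ri.
    + exists v. do 2 (split; auto). apply RemB_iff. split; auto.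
      exists (a + q0 * (v + k.+1 * D * a)). unfold a'. rewrite Eq0. unfold beta_mod. ring.
  - intros i Hi Hin. apply lt_succ_r_or in Hi. destruct Hi as [Hi| ->].
    + destruct (H2 i Hi Hin) as [t [_ Et]]. exists (t * beta_mod D k).
      split; [|unfold P'; rewrite Et; ring].
      apply lt_succ_r. unfold P'. rewrite Et, <- mul_assoc. apply le_mul_l, beta_mod_neq_0.
    + exists P. split; [|unfold P'; ring]. apply lt_succ_r, le_mul_r, beta_mod_neq_0.
  - intros j Hj Hkj. apply le_succ_l in Hkj.
    destruct (H3 j Hj (lt_le_incl _ _ Hkj)) as [uj [_ Ruj]]. apply RemB_iff in Ruj.
    destruct (beta_mod_inverse D k j HD Hkj) as [wk Rwk].
    { intros k' Hk' Hk'j. apply Hdiv; auto. apply lt_le_incl. eapply le_lt_trans; eauto. }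
    destruct (Rem_one_reduce P' (uj * wk) (beta_mod D j)) as [u' [Hu' Ru']].
    { apply Rem_one_mul; auto. }
    exists u'. split; [exact Hu'|]. apply RemB_iff, Ru'.
Qed.

Lemma crt_invariant_exists k : exists a P, crt_invariant k a P.
Proof.
  assert (H : forall k, exists w a, a < w.+1 /\ exists P, P < w.+1 /\ crt_invariant k a P).
  { induction_Sigma01_in
      (PEx (fun w => PExb (lsucc (lvar w)) (fun a => PExb (lsucc (lvar w)) (fun P =>
        PAnd (PNot (PEq (lvar P) lzero))
        (PAnd (PAllb (lpar 0) (fun i => PImp (PLt (lvar i) (lpar 1))
                (PExb (lpar 3) (fun v => PAnd (lembed g i v 4)
                   (RemP (lvar a) (lbeta_mod (lpar 2) (lvar i)) (lvar v))))))
        (PAnd (PAllb (lpar 0) (fun i => PImp (PLt (lvar i) (lpar 1))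
                (PExb (lsucc (lvar P)) (fun t =>
                   PEq (lvar P) (lmul (lbeta_mod (lpar 2) (lvar i)) (lvar t))))))
              (PAllb (lpar 1) (fun j => PImp (PLe (lpar 0) (lvar j))
                (PExb (lbeta_mod (lpar 2) (lvar j)) (fun u =>
                   RemP (lmul (lvar P) (lvar u)) (lbeta_mod (lpar 2) (lvar j)) lone))))))))) O)
      (scons n (scons D (scons V eG))) E.
    - apply Sigma01_fex. solve_Delta0.
    - intros; unfold crt_invariant, G; unfold_builders; sat_congr.
    - exists o1, o0. split; [apply lt_0_succ|]. exists o1. split; [apply lt_succ_diag_r|].
      apply crt_invariant_0.
    - intros k' [w [a [Ha [P [HP Hinv]]]]].
      destruct (classic (k' < n)) as [Hkn|Hkn].
      + destruct (crt_invariant_succ k' a P Hkn Hinv) as [a' [P' Hinv']].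
        exists (a' + P'), a'. split; [apply lt_succ_r, le_add_r|].
        exists P'. split; [apply lt_succ_r, le_add_l | exact Hinv'].
      + exists w, a. split; [exact Ha|]. exists P. split; [exact HP|].
        apply nlt_le in Hkn. destruct Hinv as [HP0 [H1 [H2 H3]]].
        assert (Hk : forall i, i < k'.+1 -> i < n -> i < k').
        { intros i Hi Hin. apply lt_succ_r_or in Hi. destruct Hi as [Hi| ->]; auto.
          exfalso. exact (le_nlt _ _ Hkn Hin). }
        split; [exact HP0|]. split; [|split].
        * intros i Hi Hin. apply H1; auto.
        * intros i Hi Hin. apply H2; auto.
        * intros j Hj Hkj. apply H3; auto. apply (le_trans _ k'.+1); auto.
          apply lt_le_incl, lt_succ_diag_r. }
  destruct (H k) as [w [a [_ [P [_ Hinv]]]]]. eauto.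
Qed.

Lemma chinese_remainder :
  exists a, forall i, i < n -> exists v, v < V /\ G i v /\ Rem M a (beta_mod D i) v.
Proof.
  destruct (crt_invariant_exists n) as [a [P [_ [H1 _]]]].
  exists a. intros i Hi. destruct (H1 i Hi Hi) as [v [Hv [Gv Rv]]].
  exists v. do 2 (split; auto). apply RemB_iff, Rv.
Qed.
End ChineseRemainder.

Lemma Delta0_function_coded_below L V : exists B, forall n, n <= L ->
  forall g, Delta0 g -> forall eG E,
  (forall i, i < n -> exists v, v < V /\ sat M (scons v (scons i eG)) E g) ->
  (forall i v v', i < n -> sat M (scons v (scons i eG)) E g ->
     sat M (scons v' (scons i eG)) E g -> v = v') ->
  exists c, c <= B /\ Len M c n /\
    forall i w, i < n -> (Entry M c i w <-> sat M (scons w (scons i eG)) E g).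
Proof.
  destruct (exists_common_multiple (L + V)) as [D [HD HdivD]].
  destruct (exists_multiple_of_beta_mods D L) as [Q [HQ HdivQ]].
  exists (pair M L (pair M Q D)). intros n Hn g Hg eG E Htot Hfun.
  assert (Hdiv : forall k, o0 < k -> k <= n -> exists t, D = k * t).
  { intros k Hk Hkn. destruct (HdivD k) as [t [_ Et]]; eauto.
    apply lt_succ_r, (le_trans _ n), (le_trans _ L); auto. apply le_add_r. }
  assert (HV : V <= D).
  { destruct (zero_or_succ V) as [->|[p Ep]]; [apply le_0_l|].
    destruct (HdivD V) as [t [_ Et]].
    - apply lt_succ_r, le_add_l.
    - rewrite Ep. apply lt_0_succ.
    - rewrite Et. apply le_mul_r. intros Ht. apply HD. rewrite Et, Ht. ring. }
  destruct (chinese_remainder n D V g eG E Hg HD Hdiv HV Htot) as [a Ha].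
  destruct (div_exists Q a HQ) as [q [r [Hr Ea]]].
  exists (pair M n (pair M r D)). split; [|split].
  - apply pair_le_mono; auto. apply pair_le_mono; [apply lt_le_incl, Hr | apply le_refl].
  - exists r, D. reflexivity.
  - intros i w Hi. rewrite (Entry_pair _ n r D i w eq_refl).
    destruct (Ha i Hi) as [v [_ [Gv Rv]]].
    assert (Rv' : Rem M r (beta_mod D i) v).
    { destruct (HdivQ i) as [t [_ Et]]; [eapply lt_le_trans; eauto|].
      apply (Rem_add_mul_inv _ _ _ (q * t)). replace (r + q * t * beta_mod D i) with a; auto.
      rewrite Ea, Et. ring. }
    split.
    + intros [_ Rw]. rewrite (Rem_unique _ _ _ _ Rw Rv'). exact Gv.
    + intros Gw. split; auto. rewrite (Hfun i w v Hi Gw Gv). exact Rv'.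
Qed.

Lemma Delta0_function_coded n V g eG E : Delta0 g ->
  (forall i, i < n -> exists v, v < V /\ sat M (scons v (scons i eG)) E g) ->
  (forall i v v', i < n -> sat M (scons v (scons i eG)) E g ->
     sat M (scons v' (scons i eG)) E g -> v = v') ->
  exists c, Len M c n /\ forall i w, i < n -> (Entry M c i w <-> sat M (scons w (scons i eG)) E g).
Proof.
  intros Hg H1 H2. destruct (Delta0_function_coded_below n V) as [B HB].
  destruct (HB n (le_refl n) g Hg eG E H1 H2) as [c [_ Hc]]. eauto.
Qed.

(** * Operations on coded sequences *)

Definition LenB (c l : N) : Prop :=
  exists a, a < c.+1 /\ exists d, d < c.+1 /\ c = pair M l (pair M a d).
Definition EntryB (c i v : N) : Prop :=
  exists l, l < c.+1 /\ exists a, a < c.+1 /\ exists d, d < c.+1 /\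
    (c = pair M l (pair M a d) /\ (i < l /\ RemB a (beta_mod d i) v)).

Definition LenP (c l : lterm) : lform :=
  PExb (lsucc c) (fun a => PExb (lsucc c) (fun d => PEq c (lpair l (lpair (lvar a) (lvar d))))).
Definition EntryP (c i v : lterm) : lform :=
  PExb (lsucc c) (fun l => PExb (lsucc c) (fun a => PExb (lsucc c) (fun d =>
    PAnd (PEq c (lpair (lvar l) (lpair (lvar a) (lvar d))))
         (PAnd (PLt i (lvar l)) (RemP (lvar a) (lbeta_mod (lvar d) i) v))))).
#[local] Hint Unfold LenP EntryP : builders.

Lemma pair_components_le l a d : l <= pair M l (pair M a d) /\ a <= pair M l (pair M a d) /\
  d <= pair M l (pair M a d).
Proof.
  split; [apply pair_ge_l|]. split.
  - apply (le_trans _ (pair M a d)); [apply pair_ge_l | apply pair_ge_r].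
  - apply (le_trans _ (pair M a d)); [apply pair_ge_r | apply pair_ge_r].
Qed.

Lemma LenB_iff c l : LenB c l <-> Len M c l.
Proof.
  split.
  - intros [a [_ [d [_ E]]]]. exists a, d. exact E.
  - intros [a [d ->]]. destruct (pair_components_le l a d) as [_ [Ha Hd]].
    exists a. split; [apply lt_succ_r, Ha|]. exists d. split; [apply lt_succ_r, Hd | reflexivity].
Qed.

Lemma EntryB_iff c i v : EntryB c i v <-> Entry M c i v.
Proof.
  split.
  - intros [l [_ [a [_ [d [_ [E [H1 H2]]]]]]]]. apply RemB_iff in H2. exists l, a, d. auto.
  - intros [l [a [d [-> [H1 H2]]]]]. apply RemB_iff in H2.
    destruct (pair_components_le l a d) as [Hl [Ha Hd]].
    exists l. split; [apply lt_succ_r, Hl|]. exists a. split; [apply lt_succ_r, Ha|].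
    exists d. split; [apply lt_succ_r, Hd|]. auto.
Qed.

Lemma sat_EntryP v i c e E :
  sat M (scons v (scons i (scons c e))) E (EntryP (lpar 2) (lpar 1) (lpar 0) O) <-> Entry M c i v.
Proof. rewrite <- EntryB_iff. unfold EntryB, RemB. unfold_builders. sat_congr. Qed.

Lemma Entry_lt_succ c i v : Entry M c i v -> v < c.+1.
Proof. intros H. apply lt_succ_r. eapply Entry_le; eauto. Qed.

Lemma seq_zero n : exists c, Len M c n /\ forall i w, i < n -> (Entry M c i w <-> w = o0).
Proof.
  apply (Delta0_function_coded n o1 (PEq (lpar 0) lzero O) e0 E0); [solve_Delta0| |].
  - intros i _. exists o0. split; [|reflexivity]. rewrite <- (add_0_l o1). apply lt_0_succ.
  - intros i v v' _ H1 H2. simpl in *. congruence.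
Qed.

Lemma seq_update c l p w : Len M c l -> exists c', Len M c' l /\
  forall i v, i < l -> (Entry M c' i v <-> (i = p /\ v = w) \/ (i <> p /\ Entry M c i v)).
Proof.
  intros Hl.
  set (g := POr (PAnd (PEq (lpar 1) (lpar 3)) (PEq (lpar 0) (lpar 4)))
                (PAnd (PNot (PEq (lpar 1) (lpar 3))) (EntryP (lpar 2) (lpar 1) (lpar 0))) O).
  assert (Hg : forall i v, sat M (scons v (scons i (scons c (scons p (scons w e0))))) E0 g <->
                      (i = p /\ v = w) \/ (i <> p /\ Entry M c i v)).
  { intros i v. rewrite <- sat_EntryP with (e := e0) (E := E0). unfold g. unfold_builders. sat_congr. }
  destruct (Delta0_function_coded l (c + w).+1 g (scons c (scons p (scons w e0))) E0)
    as [c' [Hc' Ec']].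
  - unfold g. solve_Delta0.
  - intros i Hi. destruct (classic (i = p)) as [->|Hne].
    + exists w. rewrite Hg. split; [apply lt_succ_r, le_add_l | auto].
    + destruct (Entry_exists c l i Hl Hi) as [v Ev]. exists v. rewrite Hg. split; [|auto].
      apply lt_succ_r, (le_trans _ c); [eapply Entry_le; eauto | apply le_add_r].
  - intros i v v' _. rewrite !Hg.
    intros [[-> ->]|[A B]] [[C ->]|[C D]]; try tauto. eapply Entry_fun; eauto.
  - exists c'. split; [exact Hc'|]. intros i v Hi. rewrite Ec', Hg by exact Hi. reflexivity.
Qed.

Lemma seq_incr_after c l p : Len M c l -> exists c', Len M c' l /\
  forall i v, i < l -> (Entry M c' i v <->
    (i <= p /\ Entry M c i v) \/ (p < i /\ exists y, Entry M c i y /\ v = y.+1)).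
Proof.
  intros Hl.
  set (g := POr (PAnd (PLe (lpar 1) (lpar 3)) (EntryP (lpar 2) (lpar 1) (lpar 0)))
                (PAnd (PLt (lpar 3) (lpar 1)) (PExb (lsucc (lpar 2)) (fun y =>
                   PAnd (EntryP (lpar 2) (lpar 1) (lvar y)) (PEq (lpar 0) (lsucc (lvar y)))))) O).
  assert (Hg : forall i v, sat M (scons v (scons i (scons c (scons p e0)))) E0 g <->
    (i <= p /\ Entry M c i v) \/ (p < i /\ exists y, y < c.+1 /\ (Entry M c i y /\ v = y.+1))).
  { intros i v. setoid_rewrite <- EntryB_iff. unfold g, EntryB, RemB. unfold_builders. sat_congr. }
  assert (Hg' : forall i v, sat M (scons v (scons i (scons c (scons p e0)))) E0 g <->
    (i <= p /\ Entry M c i v) \/ (p < i /\ exists y, Entry M c i y /\ v = y.+1)).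
  { intros i v. rewrite Hg. split; (intros [H|[Hi [y Hy]]]; [left; exact H | right; split; [exact Hi|]]).
    - exists y. tauto.
    - exists y. split; [apply (Entry_lt_succ c i), Hy | exact Hy]. }
  destruct (Delta0_function_coded l c.+1.+1 g (scons c (scons p e0)) E0) as [c' [Hc' Ec']].
  - unfold g. solve_Delta0.
  - intros i Hi. destruct (Entry_exists c l i Hl Hi) as [y Ey].
    destruct (lt_trichotomy p i) as [Hpi|Hpi].
    + exists y.+1. rewrite Hg'. split; [apply add_lt_mono_r, (Entry_lt_succ c i), Ey|]. eauto.
    + exists y. rewrite Hg'. split.
      * apply (lt_trans _ c.+1); [apply (Entry_lt_succ c i), Ey | apply lt_succ_diag_r].
      * left. split; [destruct Hpi as [->|Hpi]; [apply le_refl | apply lt_le_incl, Hpi] | exact Ey].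
  - intros i v v' _. rewrite !Hg'. intros [[A B]|[A [y [B ->]]]] [[C D]|[C [y' [D ->]]]].
    + eapply Entry_fun; eauto.
    + destruct (le_nlt _ _ A C).
    + destruct (le_nlt _ _ C A).
    + rewrite (Entry_fun _ _ _ _ B D). reflexivity.
  - exists c'. split; [exact Hc'|]. intros i v Hi. rewrite Ec', Hg' by exact Hi. reflexivity.
Qed.

Lemma seq_snoc h l y : Len M h l -> exists h', Len M h' l.+1 /\
  forall k v, k < l.+1 -> (Entry M h' k v <-> (k < l /\ Entry M h k v) \/ (~ k < l /\ v = y)).
Proof.
  intros Hl.
  set (g := POr (PAnd (PLt (lpar 1) (lpar 3)) (EntryP (lpar 2) (lpar 1) (lpar 0)))
                (PAnd (PNot (PLt (lpar 1) (lpar 3))) (PEq (lpar 0) (lpar 4))) O).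
  assert (Hg : forall k v, sat M (scons v (scons k (scons h (scons l (scons y e0))))) E0 g <->
                      (k < l /\ Entry M h k v) \/ (~ k < l /\ v = y)).
  { intros k v. rewrite <- sat_EntryP with (e := e0) (E := E0). unfold g. unfold_builders. sat_congr. }
  destruct (Delta0_function_coded l.+1 (h + y).+1 g (scons h (scons l (scons y e0))) E0)
    as [h' [Hh' Eh']].
  - unfold g. solve_Delta0.
  - intros k _. destruct (classic (k < l)) as [Hk|Hk].
    + destruct (Entry_exists h l k Hl Hk) as [v Hv]. exists v. rewrite Hg. split; [|auto].
      apply lt_succ_r, (le_trans _ h); [eapply Entry_le; eauto | apply le_add_r].
    + exists y. rewrite Hg. split; [apply lt_succ_r, le_add_l | auto].
  - intros k v v' _. rewrite !Hg. intros [[A B]|[A ->]] [[C D]|[C ->]]; try tauto.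
    eapply Entry_fun; eauto.
  - exists h'. split; [exact Hh'|]. intros k v Hk. rewrite Eh', Hg by exact Hk. reflexivity.
Qed.

(** * Bounded preimages of an injection *)

Section Injection.
Variable F : Set2 M.
Hypothesis HF : InjFun M F.
Let EF : nat -> Set2 M := fun _ => F.

Lemma InjFun_dom_neq_0 j i : mem M (pair M j i) F -> j <> o0.
Proof.
  intros H. destruct HF as [Hdom _]. destruct (Hdom _ H) as [j' [i' [Hj E]]].
  apply pair_inj in E. destruct E as [-> _]. exact Hj.
Qed.

Lemma InjFun_inj j j' i : mem M (pair M j i) F -> mem M (pair M j' i) F -> j = j'.
Proof. destruct HF as [_ [_ [_ Hinj]]]. apply Hinj. Qed.

(* [c1] is a partial inverse of [f] on [[0, L)] and [c2] counts its defined
   entries: [c2_p] is the number of [p' < p] in the range of [c1]. *)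
Definition counts (L c1 c2 k : N) : Prop :=
  Len M c1 L /\ Len M c2 L.+1 /\ Entry M c2 o0 o0 /\
  (forall p, p < L -> exists v x y, Entry M c1 p v /\ Entry M c2 p x /\ Entry M c2 p.+1 y /\
     ((v = o0 /\ y = x) \/ (v <> o0 /\ y = x.+1 /\ mem M (pair M v p) F))) /\
  exists z, Entry M c2 L z /\ k <= z.

Definition countsB (L k : N) : Prop :=
  exists w, exists c1, c1 < w.+1 /\ exists c2, c2 < w.+1 /\
  (LenB c1 L /\ (LenB c2 L.+1 /\ (EntryB c2 o0 o0 /\
  ((forall p, p < L -> exists v, v < c1.+1 /\ exists x, x < c2.+1 /\ exists y, y < c2.+1 /\
     (EntryB c1 p v /\ (EntryB c2 p x /\ (EntryB c2 p.+1 y /\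
     ((v = o0 /\ y = x) \/ (v <> o0 /\ (y = x.+1 /\ mem M (pair M v p) F))))))) /\
   exists z, z < c2.+1 /\ (EntryB c2 L z /\ k <= z))))).

Lemma countsB_iff L k : countsB L k <-> exists c1 c2, counts L c1 c2 k.
Proof.
  split.
  - intros [w [c1 [_ [c2 [_ [H1 [H2 [H3 [H4 [z [_ [H5 H6]]]]]]]]]]]].
    rewrite LenB_iff in H1, H2. rewrite EntryB_iff in H3, H5.
    exists c1, c2. do 3 (split; auto). split; [|eauto].
    intros p Hp. destruct (H4 p Hp) as [v [_ [x [_ [y [_ [A1 [A2 [A3 A4]]]]]]]]].
    rewrite EntryB_iff in A1, A2, A3. exists v, x, y. tauto.
  - intros [c1 [c2 [H1 [H2 [H3 [H4 [z [H5 H6]]]]]]]].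
    exists (c1 + c2), c1. split; [apply lt_succ_r, le_add_r|].
    exists c2. split; [apply lt_succ_r, le_add_l|].
    rewrite !LenB_iff, !EntryB_iff. do 3 (split; auto). split.
    + intros p Hp. destruct (H4 p Hp) as [v [x [y [A1 [A2 [A3 A4]]]]]].
      exists v. split; [eapply Entry_lt_succ; eauto|].
      exists x. split; [eapply Entry_lt_succ; eauto|].
      exists y. split; [eapply Entry_lt_succ; eauto|].
      rewrite !EntryB_iff. tauto.
    + exists z. split; [eapply Entry_lt_succ; eauto|]. rewrite EntryB_iff. auto.
Qed.

Definition count_stepP (c1 c2 p : nat) : lform :=
  PExb (lsucc (lvar c1)) (fun v => PExb (lsucc (lvar c2)) (fun x => PExb (lsucc (lvar c2)) (fun y =>
    PAnd (EntryP (lvar c1) (lvar p) (lvar v))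
    (PAnd (EntryP (lvar c2) (lvar p) (lvar x))
    (PAnd (EntryP (lvar c2) (lsucc (lvar p)) (lvar y))
    (POr (PAnd (PEq (lvar v) lzero) (PEq (lvar y) (lvar x)))
         (PAnd (PNot (PEq (lvar v) lzero))
               (PAnd (PEq (lvar y) (lsucc (lvar x))) (PMem (lpair (lvar v) (lvar p)) 0))))))))).
#[local] Hint Unfold count_stepP : builders.

Lemma countsB_induction L : countsB L o0 -> (forall k, countsB L k -> countsB L k.+1) ->
  forall k, countsB L k.
Proof.
  intros H0 HS. induction_Sigma01_in
    (PEx (fun w => PExb (lsucc (lvar w)) (fun c1 => PExb (lsucc (lvar w)) (fun c2 =>
      PAnd (LenP (lvar c1) (lpar 1))
      (PAnd (LenP (lvar c2) (lsucc (lpar 1)))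
      (PAnd (EntryP (lvar c2) lzero lzero)
      (PAnd (PAllb (lpar 1) (fun p => count_stepP c1 c2 p))
            (PExb (lsucc (lvar c2)) (fun z =>
               PAnd (EntryP (lvar c2) (lpar 1) (lvar z)) (PLe (lpar 0) (lvar z)))))))))) O)
    (scons L e0) EF.
  - apply Sigma01_fex. solve_Delta0.
  - intros; unfold countsB, EntryB, LenB, RemB; unfold_builders; sat_congr.
  - exact H0.
  - exact HS.
Qed.

Lemma counts_0 L : exists c1 c2, counts L c1 c2 o0.
Proof.
  destruct (seq_zero L) as [c1 [H1 E1]]. destruct (seq_zero L.+1) as [c2 [H2 E2]].
  exists c1, c2. split; [exact H1|]. split; [exact H2|]. split; [apply E2; auto; apply lt_0_succ|].
  split.
  - intros p Hp. exists o0, o0, o0.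
    split; [apply E1; auto|]. split; [apply E2; auto; apply (lt_trans _ L); auto; apply lt_succ_diag_r|].
    split; [apply E2; auto; apply add_lt_mono_r, Hp|]. auto.
  - exists o0. split; [apply E2; auto; apply lt_succ_diag_r | apply le_refl].
Qed.

(* If preimages of [[0, L)] are unbounded, pick one, [j], above every entry
   of [c1]; then [c1] is undefined at [f j], and defining it there adds one to
   the count. *)
Lemma counts_succ L c1 c2 k :
  (forall V, exists i j, i < L /\ mem M (pair M j i) F /\ V <= j) ->
  counts L c1 c2 k -> exists c1' c2', counts L c1' c2' k.+1.
Proof.
  intros Hnb [Hl1 [Hl2 [H0 [Hrel [z [Hz Hkz]]]]]].
  destruct (Hnb c1.+1) as [i0 [j [Hi0 [Fj Hj]]]]. apply le_succ_l in Hj.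
  destruct (Hrel i0 Hi0) as [v0 [x0 [y0 [Ev0 [Ex0 [Ey0 R0]]]]]].
  assert (Hv0 : v0 = o0 /\ y0 = x0).
  { destruct R0 as [R0|[_ [_ R3]]]; auto. exfalso.
    rewrite (InjFun_inj v0 j i0 R3 Fj) in Ev0. exact (le_nlt _ _ (Entry_le _ _ _ Ev0) Hj). }
  destruct Hv0 as [-> ->].
  destruct (seq_update c1 L i0 j Hl1) as [c1' [Hc1 E1]].
  destruct (seq_incr_after c2 L.+1 i0 Hl2) as [c2' [Hc2 E2]].
  assert (HL : forall p, p < L -> p < L.+1) by (intros; eapply lt_trans; eauto; apply lt_succ_diag_r).
  exists c1', c2'. split; [exact Hc1|]. split; [exact Hc2|].
  split; [apply E2; [apply lt_0_succ | left; split; [apply le_0_l | exact H0]]|]. split.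
  - intros p Hp. assert (Hp1 : p.+1 < L.+1) by (apply add_lt_mono_r, Hp).
    destruct (Hrel p Hp) as [v [x [y [Ev [Ex [Ey R]]]]]].
    destruct (lt_trichotomy p i0) as [Hpi|[->|Hpi]].
    + exists v, x, y. split; [apply E1; auto; right; split; [apply lt_neq|]; auto|].
      split; [apply E2; auto; left; split; [apply lt_le_incl|]; auto|].
      split; [apply E2; auto; left; split; [apply le_succ_l|]; auto|]. exact R.
    + rewrite (Entry_fun _ _ _ _ Ex Ex0), (Entry_fun _ _ _ _ Ey Ey0) in *.
      exists j, x0, x0.+1. split; [apply E1; auto|].
      split; [apply E2; auto; left; split; [apply le_refl | exact Ex0]|].
      split; [apply E2; auto; right; split; [apply lt_succ_diag_r | eauto]|].
      right. split; [eapply InjFun_dom_neq_0; eauto | auto].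
    + exists v, x.+1, y.+1. split; [apply E1; auto; right; split; [|auto]|].
      { intros ->. exact (lt_irrefl _ Hpi). }
      split; [apply E2; auto; right; eauto|].
      split; [apply E2; auto; right; split; [eapply lt_trans; [exact Hpi | apply lt_succ_diag_r] | eauto]|].
      destruct R as [[A ->]|[A [-> C]]]; [left | right]; auto.
  - exists z.+1. split; [apply E2; [apply lt_succ_diag_r | right; eauto]|].
    apply add_le_mono; [exact Hkz | apply le_refl].
Qed.

Lemma counts_le L c1 c2 k : counts L c1 c2 k -> k <= L.
Proof.
  intros [Hl1 [Hl2 [H0 [Hrel [z [Hz Hkz]]]]]].
  assert (K : forall p, p < L.+1 -> forall x, x < c2.+1 -> EntryB c2 p x -> x <= p).
  { induction_Delta0_in (PImp (PLt (lpar 0) (lsucc (lpar 2)))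
       (PAllb (lsucc (lpar 1)) (fun x => PImp (EntryP (lpar 1) (lpar 0) (lvar x)) (PLe (lvar x) (lpar 0)))) O)
       (scons c2 (scons L e0)) EF.
    - solve_Delta0.
    - intros; unfold EntryB, RemB; unfold_builders; sat_congr.
    - intros _ x _ Ex. rewrite EntryB_iff in Ex. rewrite (Entry_fun _ _ _ _ Ex H0). apply le_refl.
    - intros p IH Hp x _ Ex. rewrite EntryB_iff in Ex. apply lt_succ_cancel in Hp.
      destruct (Hrel p Hp) as [v [x0 [y [Ev [Ex0 [Ey R]]]]]].
      rewrite (Entry_fun _ _ _ _ Ex Ey).
      assert (Hx0 : x0 <= p).
      { apply IH; [eapply lt_trans; [exact Hp | apply lt_succ_diag_r]|eapply Entry_lt_succ; eauto|].
        rewrite EntryB_iff; auto. }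
      destruct R as [[_ ->]|[_ [-> _]]].
      + apply (le_trans _ p); [exact Hx0 | apply lt_le_incl, lt_succ_diag_r].
      + apply add_le_mono; [exact Hx0 | apply le_refl]. }
  apply (le_trans _ z); [exact Hkz|]. apply (K L (lt_succ_diag_r L)); [eapply Entry_lt_succ; eauto|].
  rewrite EntryB_iff; auto.
Qed.

Lemma preimage_bounded L : exists V, forall i j, i < L -> mem M (pair M j i) F -> j < V.
Proof.
  apply NNPP. intros Hn.
  assert (Hnb : forall V, exists i j, i < L /\ mem M (pair M j i) F /\ V <= j).
  { intros V. apply NNPP. intros H. apply Hn. exists V. intros i j Hi Fj.
    apply NNPP. intros Hj. apply H. exists i, j. auto using nlt_le. }
  assert (K : forall k, countsB L k).
  { apply countsB_induction.
    - apply countsB_iff, counts_0.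
    - intros k Hk. apply countsB_iff in Hk. destruct Hk as [c1 [c2 Hk]].
      apply countsB_iff. eapply counts_succ; eauto. }
  destruct (proj1 (countsB_iff L L.+1) (K _)) as [c1 [c2 Hc]].
  exact (lt_nle _ _ (lt_succ_diag_r L) (counts_le _ _ _ _ Hc)).
Qed.

(** * Long sequences and misplaced zeros in an infinite subset of T_f *)

Section Tree.
Variable X : Set2 M.
Hypothesis HXinf : Infinite M X.
Hypothesis HXsub : Subset M X (InTf M F).
Let EX : nat -> Set2 M := fun k => match k with 0 => F | _ => X end.

(* Sequences of length [< L] in [T_f] have entries bounded by
   [preimage_bounded L], hence canonical codes bounded by some [B]; an element
   of [X] above [B] is therefore long. *)
Lemma long_sequence_in L : exists c l, mem M c X /\ Len M c l /\ L <= l.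
Proof.
  apply NNPP; intros Hn.
  assert (Hshort : forall c l, mem M c X -> Len M c l -> l < L).
  { intros c l Hc Hl. apply NNPP; intros H. apply Hn. exists c, l. auto using nlt_le. }
  destruct (preimage_bounded L) as [V HV].
  destruct (Delta0_function_coded_below L V.+1) as [B HB].
  destruct (HXinf B) as [c [HcB Hc]].
  destruct (HXsub c Hc) as [[_ Hmin] [l [Hl [Hrange _]]]].
  assert (HlL : l < L) by eauto.
  destruct (HB l (lt_le_incl _ _ HlL) (EntryP (lpar 2) (lpar 1) (lpar 0) O)
              ltac:(solve_Delta0) (scons c e0) E0) as [c' [Hc'B [Hc'l Hc'e]]].
  - intros i Hi. destruct (Entry_exists c l i Hl Hi) as [v Hv].
    exists v. rewrite sat_EntryP. split; [|exact Hv].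
    destruct (classic (v = o0)) as [->|Hv0]; [apply lt_0_succ|].
    apply (lt_trans _ V); [|apply lt_succ_diag_r].
    apply (HV i v); [eapply lt_trans; eauto | apply Hrange; auto].
  - intros i v v' _. rewrite !sat_EntryP. apply Entry_fun.
  - apply (Hmin c'); [eapply le_lt_trans; eauto|].
    exists l. split; [exact Hc'l|]. split; [exact Hl|].
    intros i v Hi. rewrite Hc'e by exact Hi. apply sat_EntryP.
Qed.

(* Otherwise [i] would be in the range of [f] iff every long enough [t] in
   [X] has [t_i <> 0]: a [Delta01] definition of the range. *)
Lemma misplaced_zero : ~ RangeExists M F -> forall B,
  exists t l i j, mem M t X /\ Len M t l /\ B < l /\ i < l /\ Entry M t i o0 /\
    mem M (pair M j i) F.
Proof.
  intros HR B. apply NNPP. intros Hn. apply HR.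
  assert (H : forall t l i j, mem M t X -> Len M t l -> B < l -> i < l -> Entry M t i o0 ->
                ~ mem M (pair M j i) F).
  { intros t l i j H1 H2 H3 H4 H5 H6. apply Hn. exists t, l, i, j. tauto. }
  destruct (Delta01_comprehension M HM (PEx (fun j => PMem (lpair (lvar j) (lpar 0)) 0) O)
     (PAll (fun t => PImp (PMem (lvar t) 1) (PAllb (lsucc (lvar t)) (fun l =>
        PImp (PAnd (LenP (lvar t) (lvar l)) (PAnd (PLt (lpar 0) (lvar l)) (PLt (lpar 1) (lvar l))))
             (PNot (EntryP (lvar t) (lpar 0) lzero))))) O)
     (scons B e0) EX (fun n => exists j, mem M (pair M j n) F)) as [R HRm].
  - apply Sigma01_fex. solve_Delta0.
  - apply Pi01_fall. solve_Delta0.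
  - intro n. unfold_builders. sat_congr.
  - intro n. transitivity (forall t, mem M t X -> forall l, l < t.+1 ->
                             (LenB t l /\ (n < l /\ B < l)) -> ~ EntryB t n o0).
    2: { unfold EntryB, LenB, RemB. unfold_builders. sat_congr. }
    split.
    + intros [j Fj] t Ht l _ [Hl [Hnl HBl]] He. rewrite LenB_iff in Hl. rewrite EntryB_iff in He.
      exact (H t l n j Ht Hl HBl Hnl He Fj).
    + intros Hq. destruct (long_sequence_in (n + B).+1) as [t [l [Ht [Hl Hle]]]].
      destruct (HXsub t Ht) as [_ [l' [Hl' [Hrange _]]]].
      rewrite (Len_unique t l' l Hl' Hl) in Hrange.
      assert (Hnl : n < l) by (eapply lt_le_trans; [|exact Hle]; apply lt_iff_add; exists B; ring).
      assert (HBl : B < l) by (eapply lt_le_trans; [|exact Hle]; apply lt_iff_add; exists n; ring).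
      destruct (Entry_exists t l n Hl Hnl) as [w Hw].
      assert (Hw0 : w <> o0).
      { intros ->. apply (Hq t Ht l); [apply lt_succ_r; eapply Len_le; eauto| |].
        - rewrite LenB_iff. auto.
        - rewrite EntryB_iff. exact Hw. }
      exists w. apply Hrange; auto.
  - exists R. intro i. rewrite HRm. reflexivity.
Qed.

Lemma nonzero_entries_persist s t ls lt : mem M s X -> mem M t X -> Len M s ls -> Len M t lt ->
  s < lt -> forall i v, i < ls -> Entry M s i v -> v <> o0 -> Entry M t i v.
Proof.
  intros Hs Ht Hls Hlt Hslt i v Hi Ev Hv0.
  destruct (HXsub s Hs) as [_ [ls' [Hls' [Hrs _]]]]. rewrite (Len_unique _ _ _ Hls' Hls) in Hrs.
  destruct (HXsub t Ht) as [_ [lt' [Hlt' [Hrt Hnz]]]].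
  rewrite (Len_unique _ _ _ Hlt' Hlt) in Hrt, Hnz.
  assert (Hilt : i < lt).
  { apply (lt_trans _ ls); [exact Hi|]. apply (le_lt_trans _ s); [eapply Len_le; eauto | exact Hslt]. }
  destruct (Entry_exists t lt i Hlt Hilt) as [w Ew].
  assert (Hw0 : w <> o0).
  { apply (Hnz i Hilt); [|exact Ew]. exists v. split; [|apply Hrs; auto].
    eapply le_lt_trans; [eapply Entry_le; eauto | exact Hslt]. }
  rewrite (InjFun_inj w v i (Hrt i w Hilt Ew Hw0) (Hrs i v Hi Ev Hv0)) in Ew. exact Ew.
Qed.

(* A zero of [s] at [f j] becomes nonzero in any [t] of length above [j]; the
   first such position witnesses [s <_KB t]. *)
Lemma KB_of_misplaced_zero s t ls lt i0 j : mem M s X -> mem M t X -> Len M s ls -> Len M t lt ->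
  pair M s j < lt -> i0 < ls -> Entry M s i0 o0 -> mem M (pair M j i0) F -> KB M s t.
Proof.
  intros Hs Ht Hls Hlt Hp Hi0 Ei0 Fj.
  assert (Hslt : s < lt) by (eapply le_lt_trans; [apply pair_ge_l | exact Hp]).
  assert (Hlslt : forall i, i < ls -> i < lt).
  { intros i Hi. eapply lt_trans; [exact Hi|]. eapply le_lt_trans; [eapply Len_le; eauto | exact Hslt]. }
  destruct (HXsub t Ht) as [_ [lt' [Hlt' [_ Hnz]]]]. rewrite (Len_unique _ _ _ Hlt' Hlt) in Hnz.
  set (g := PAnd (PLt (lpar 0) (lpar 3))
               (PAnd (EntryP (lpar 1) (lpar 0) lzero) (PNot (EntryP (lpar 2) (lpar 0) lzero))) O).
  assert (Hg : forall i, sat M (scons i (scons s (scons t (scons ls e0)))) EX g <->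
                    i < ls /\ Entry M s i o0 /\ ~ Entry M t i o0).
  { intros i. rewrite <- !EntryB_iff. unfold g, EntryB, RemB. unfold_builders. sat_congr. }
  destruct (least_Delta0 g (scons s (scons t (scons ls e0))) EX) as [i [Hi Hmin]].
  - unfold g. solve_Delta0.
  - exists i0. apply Hg. split; [exact Hi0|]. split; [exact Ei0|].
    intros E. apply (Hnz i0 (Hlslt i0 Hi0)) in E; [exact (E eq_refl)|].
    exists j. split; [eapply le_lt_trans; [apply pair_ge_r | exact Hp] | exact Fj].
  - apply Hg in Hi. destruct Hi as [Hils [Es Nt]].
    assert (Hzero : forall k, k < i -> Entry M s k o0 -> Entry M t k o0).
    { intros k Hk Ek. apply NNPP. intros Nk. apply (Hmin k Hk), Hg.
      split; [eapply lt_trans; eauto | auto]. }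
    exists ls, lt. split; [exact Hls|]. split; [exact Hlt|]. right.
    exists i. split; [exact Hils|]. split; [apply Hlslt, Hils|]. split.
    + destruct (Entry_exists t lt i Hlt (Hlslt i Hils)) as [w Ew]. exists o0, w.
      split; [exact Es|]. split; [exact Ew|]. apply neq_0_lt_0. intros ->. exact (Nt Ew).
    + intros k v Hk. assert (Hkls : k < ls) by (eapply lt_trans; eauto).
      destruct (Entry_exists s ls k Hls Hkls) as [v' Ev'].
      assert (Et : Entry M t k v').
      { destruct (classic (v' = o0)) as [->|Hv'].
        - apply Hzero; auto.
        - exact (nonzero_entries_persist s t ls lt Hs Ht Hls Hlt Hslt k v' Hkls Ev' Hv'). }
      split; intros Ev; [rewrite (Entry_fun _ _ _ _ Ev Ev') | rewrite (Entry_fun _ _ _ _ Ev Et)]; assumption.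
Qed.

(** * The sequence of misplaced zeros *)

Section Construction.
Hypothesis HR : ~ RangeExists M F.

(* [Step p <t, j>]: [t] in [X] is longer than [p] and has a zero at some
   [f j], which condition (ii) of [T_f] will forbid in every [t'] longer
   than [j]. *)
Definition Step (p p' : N) : Prop :=
  exists t j l i, p' = pair M t j /\ mem M t X /\ Len M t l /\ p < l /\ i < l /\
    Entry M t i o0 /\ mem M (pair M j i) F.
Definition Next (p p' : N) : Prop := Step p p' /\ forall q, q < p' -> ~ Step p q.
Definition Hist (h n : N) : Prop :=
  Len M h n.+1.+1 /\ Entry M h o0 o0 /\
  forall k, k < n.+1 -> exists x y, Entry M h k x /\ Entry M h k.+1 y /\ Next x y.

Definition StepB (p p' : N) : Prop :=
  exists t, t < p'.+1 /\ exists j, j < p'.+1 /\ (p' = pair M t j /\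
  (mem M t X /\ exists l, l < t.+1 /\ (LenB t l /\ (p < l /\
    exists i, i < l /\ (EntryB t i o0 /\ mem M (pair M j i) F))))).
Definition NextB (p p' : N) : Prop := StepB p p' /\ forall q, q < p' -> ~ StepB p q.
Definition HistB (h n : N) : Prop :=
  LenB h n.+1.+1 /\ (EntryB h o0 o0 /\
  forall k, k < n.+1 -> exists x, x < h.+1 /\ exists y, y < h.+1 /\
    (EntryB h k x /\ (EntryB h k.+1 y /\ NextB x y))).

Definition StepP (p p' : lterm) : lform :=
  PExb (lsucc p') (fun t => PExb (lsucc p') (fun j =>
    PAnd (PEq p' (lpair (lvar t) (lvar j)))
    (PAnd (PMem (lvar t) 1) (PExb (lsucc (lvar t)) (fun l =>
      PAnd (LenP (lvar t) (lvar l)) (PAnd (PLt p (lvar l))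
      (PExb (lvar l) (fun i => PAnd (EntryP (lvar t) (lvar i) lzero)
                                    (PMem (lpair (lvar j) (lvar i)) 0))))))))).
Definition NextP (p p' : lterm) : lform :=
  PAnd (StepP p p') (PAllb p' (fun q => PNot (StepP p (lvar q)))).
Definition HistP (h n : lterm) : lform :=
  PAnd (LenP h (lsucc (lsucc n))) (PAnd (EntryP h lzero lzero)
  (PAllb (lsucc n) (fun k => PExb (lsucc h) (fun x => PExb (lsucc h) (fun y =>
     PAnd (EntryP h (lvar k) (lvar x))
     (PAnd (EntryP h (lsucc (lvar k)) (lvar y)) (NextP (lvar x) (lvar y)))))))).
#[local] Hint Unfold StepP NextP HistP : builders.

Lemma StepB_iff p p' : StepB p p' <-> Step p p'.
Proof.
  split.
  - intros [t [_ [j [_ [E [Ht [l [_ [Hl [Hpl [i [Hi [Hi0 Fj]]]]]]]]]]]]].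
    rewrite LenB_iff in Hl. rewrite EntryB_iff in Hi0. exists t, j, l, i. tauto.
  - intros [t [j [l [i [-> [Ht [Hl [Hpl [Hi [Hi0 Fj]]]]]]]]]].
    exists t. split; [apply lt_succ_r, pair_ge_l|].
    exists j. split; [apply lt_succ_r, pair_ge_r|].
    split; [reflexivity|]. split; [exact Ht|].
    exists l. split; [apply lt_succ_r; eapply Len_le; eauto|].
    rewrite LenB_iff. do 2 (split; auto). exists i. rewrite EntryB_iff. auto.
Qed.

Lemma NextB_iff p p' : NextB p p' <-> Next p p'.
Proof.
  unfold NextB, Next. rewrite StepB_iff.
  split; intros [A B]; split; auto; intros q Hq; rewrite ?StepB_iff in *; auto.
  rewrite <- StepB_iff. auto.
Qed.

Lemma HistB_iff h n : HistB h n <-> Hist h n.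
Proof.
  unfold HistB, Hist. rewrite LenB_iff, EntryB_iff.
  split; intros [A [B C]]; do 2 (split; auto).
  - intros k Hk. destruct (C k Hk) as [x [_ [y [_ [D [G K]]]]]].
    rewrite EntryB_iff in D, G. rewrite NextB_iff in K. exists x, y. auto.
  - intros k Hk. destruct (C k Hk) as [x [y [D [G K]]]].
    exists x. split; [eapply Entry_lt_succ; eauto|].
    exists y. split; [eapply Entry_lt_succ; eauto|].
    rewrite !EntryB_iff, NextB_iff. auto.
Qed.

Lemma sat_StepP p q e : sat M (scons q (scons p e)) EX (StepP (lpar 1) (lpar 0) O) <-> Step p q.
Proof. rewrite <- StepB_iff. unfold StepB, EntryB, LenB, RemB. unfold_builders. sat_congr. Qed.

Lemma Step_exists p : exists p', Step p p'.
Proof.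
  destruct (misplaced_zero HR p) as [t [l [i [j [Ht [Hl [Hpl [Hi [Hi0 Fj]]]]]]]]].
  exists (pair M t j), t, j, l, i. tauto.
Qed.

Lemma Next_exists p : exists p', Next p p'.
Proof.
  destruct (least_Delta0 (StepP (lpar 1) (lpar 0) O) (scons p e0) EX) as [x [Hx Hmin]].
  - solve_Delta0.
  - destruct (Step_exists p) as [p' Hp']. exists p'. exact (proj2 (sat_StepP p p' e0) Hp').
  - exists x. split; [exact (proj1 (sat_StepP p x e0) Hx)|].
    intros q Hq. rewrite <- (sat_StepP p q e0). auto.
Qed.

Lemma Next_fun p a b : Next p a -> Next p b -> a = b.
Proof.
  intros [Ha Ha'] [Hb Hb']. destruct (lt_trichotomy a b) as [H|[H|H]]; auto.
  - destruct (Hb' a H Ha).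
  - destruct (Ha' b H Hb).
Qed.

Lemma Step_lt p p' : Step p p' -> p < p'.
Proof.
  intros [t [j [l [i [-> [Ht [Hl [Hpl _]]]]]]]]. eapply lt_le_trans; [exact Hpl|].
  apply (le_trans _ t); [eapply Len_le; eauto | apply pair_ge_l].
Qed.

Lemma Hist_0 : exists h, Hist h o0.
Proof.
  destruct (Next_exists o0) as [y0 Hy0].
  destruct (seq_zero o0.+1) as [c [Hc Ec]].
  destruct (seq_snoc c o0.+1 y0 Hc) as [h [Hh Eh]].
  assert (H0 : Entry M h o0 o0).
  { apply Eh; [apply lt_0_succ|]. left. split; [apply lt_0_succ | apply Ec; auto; apply lt_0_succ]. }
  exists h. split; [exact Hh|]. split; [exact H0|].
  intros k Hk. apply lt_succ_r_or in Hk. destruct Hk as [Hk| ->]; [destruct (nlt_0_r k Hk)|].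
  exists o0, y0. split; [exact H0|]. split; [|exact Hy0].
  apply Eh; [apply lt_succ_diag_r|]. right. split; [apply lt_irrefl | reflexivity].
Qed.

Lemma Hist_succ h n : Hist h n -> exists h', Hist h' n.+1.
Proof.
  intros [Hl [H0 Hs]].
  destruct (Entry_exists h _ n.+1 Hl (lt_succ_diag_r _)) as [y Hy].
  destruct (Next_exists y) as [y' Hy'].
  destruct (seq_snoc h n.+1.+1 y' Hl) as [h' [Hh' Eh']].
  assert (Hold : forall k v, k < n.+1.+1 -> Entry M h k v -> Entry M h' k v).
  { intros k v Hk Hv. apply Eh'; [eapply lt_trans; [exact Hk | apply lt_succ_diag_r] | auto]. }
  exists h'. split; [exact Hh'|]. split; [apply Hold; [apply lt_0_succ | exact H0]|].
  intros k Hk. destruct (classic (k < n.+1)) as [Hkn|Hkn].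
  - destruct (Hs k Hkn) as [x [x' [Hx [Hx' Hn]]]]. exists x, x'.
    split; [apply Hold; [eapply lt_trans; [exact Hkn | apply lt_succ_diag_r] | exact Hx]|].
    split; [apply Hold; [apply add_lt_mono_r, Hkn | exact Hx'] | exact Hn].
  - assert (Ek : k = n.+1).
    { apply lt_succ_r_or in Hk. destruct Hk as [Hk| ->]; tauto. }
    subst k. exists y, y'. split; [apply Hold; [apply lt_succ_diag_r | exact Hy]|].
    split; [|exact Hy']. apply Eh'; [apply lt_succ_diag_r|]. right. split; [apply lt_irrefl | reflexivity].
Qed.

Lemma Hist_exists n : exists h, Hist h n.
Proof.
  assert (K : forall n, exists h, HistB h n).
  { induction_Sigma01_in (PEx (fun h => HistP (lvar h) (lpar 0)) O) e0 EX.
    - apply Sigma01_fex. solve_Delta0.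
    - intros. unfold HistB, NextB, StepB, EntryB, LenB, RemB. unfold_builders. sat_congr.
    - destruct Hist_0 as [h Hh]. exists h. apply HistB_iff, Hh.
    - intros k [h Hh]. apply HistB_iff, Hist_succ in Hh. destruct Hh as [h' Hh'].
      exists h'. apply HistB_iff, Hh'. }
  destruct (K n) as [h Hh]. exists h. apply HistB_iff, Hh.
Qed.

Lemma Hist_agree h h' n n' : Hist h n -> Hist h' n' ->
  forall k x y, k < n.+1.+1 -> k < n'.+1.+1 -> Entry M h k x -> Entry M h' k y -> x = y.
Proof.
  intros [Hl [H0 Hs]] [Hl' [H0' Hs']].
  assert (K : forall k, k < n.+1.+1 -> k < n'.+1.+1 -> forall x, x < h.+1 -> forall y, y < h'.+1 ->
     EntryB h k x -> EntryB h' k y -> x = y).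
  { induction_Delta0_in (PImp (PLt (lpar 0) (lsucc (lsucc (lpar 3))))
       (PImp (PLt (lpar 0) (lsucc (lsucc (lpar 4))))
       (PAllb (lsucc (lpar 1)) (fun x => PAllb (lsucc (lpar 2)) (fun y =>
          PImp (EntryP (lpar 1) (lpar 0) (lvar x))
          (PImp (EntryP (lpar 2) (lpar 0) (lvar y)) (PEq (lvar x) (lvar y))))))) O)
       (scons h (scons h' (scons n (scons n' e0)))) EX.
    - solve_Delta0.
    - intros. unfold EntryB, RemB. unfold_builders. sat_congr.
    - intros _ _ x _ y _ Ex Ey. rewrite EntryB_iff in Ex, Ey.
      rewrite (Entry_fun _ _ _ _ Ex H0), (Entry_fun _ _ _ _ Ey H0'). reflexivity.
    - intros k IH Hk Hk' x _ y _ Ex Ey. rewrite EntryB_iff in Ex, Ey.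
      apply lt_succ_cancel in Hk. apply lt_succ_cancel in Hk'.
      destruct (Hs k Hk) as [x1 [y1 [Ex1 [Ey1 N1]]]].
      destruct (Hs' k Hk') as [x2 [y2 [Ex2 [Ey2 N2]]]].
      assert (x1 = x2) as <-.
      { apply IH; [eapply lt_trans; [exact Hk | apply lt_succ_diag_r]
                  | eapply lt_trans; [exact Hk' | apply lt_succ_diag_r]
                  | eapply Entry_lt_succ; eauto | eapply Entry_lt_succ; eauto
                  | rewrite EntryB_iff; exact Ex1 | rewrite EntryB_iff; exact Ex2]. }
      rewrite (Entry_fun _ _ _ _ Ex Ey1), (Entry_fun _ _ _ _ Ey Ey2).
      eapply Next_fun; eauto. }
  intros k x y Hk Hk' Ex Ey. apply (K k Hk Hk' x (Entry_lt_succ _ _ _ Ex) y (Entry_lt_succ _ _ _ Ey));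
    rewrite EntryB_iff; assumption.
Qed.

Lemma Hist_increasing h n : Hist h n -> forall a b x y, a < b -> b < n.+1.+1 ->
  Entry M h a x -> Entry M h b y -> x < y.
Proof.
  intros [Hl [H0 Hs]].
  assert (K : forall b, b < n.+1.+1 -> forall a, a < b -> forall x, x < h.+1 -> forall y, y < h.+1 ->
     EntryB h a x -> EntryB h b y -> x < y).
  { induction_Delta0_in (PImp (PLt (lpar 0) (lsucc (lsucc (lpar 2))))
       (PAllb (lpar 0) (fun a => PAllb (lsucc (lpar 1)) (fun x => PAllb (lsucc (lpar 1)) (fun y =>
          PImp (EntryP (lpar 1) (lvar a) (lvar x))
          (PImp (EntryP (lpar 1) (lpar 0) (lvar y)) (PLt (lvar x) (lvar y))))))) O)
       (scons h (scons n e0)) EX.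
    - solve_Delta0.
    - intros. unfold EntryB, RemB. unfold_builders. sat_congr.
    - intros _ a Ha. destruct (nlt_0_r a Ha).
    - intros b IH Hb a Ha x _ y _ Ex Ey. rewrite EntryB_iff in Ex, Ey.
      apply lt_succ_cancel in Hb.
      destruct (Hs b Hb) as [x1 [y1 [Ex1 [Ey1 [N1 _]]]]]. rewrite (Entry_fun _ _ _ _ Ey Ey1).
      apply Step_lt in N1.
      apply lt_succ_r_or in Ha. destruct Ha as [Ha| ->].
      + apply (lt_trans _ x1); [|exact N1].
        apply (IH (lt_trans _ _ _ Hb (lt_succ_diag_r _)) a Ha);
          [eapply Entry_lt_succ; eauto | eapply Entry_lt_succ; eauto
          | rewrite EntryB_iff; exact Ex | rewrite EntryB_iff; exact Ex1].
      + rewrite (Entry_fun _ _ _ _ Ex Ex1). exact N1. }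
  intros a b x y Hab Hb Ex Ey.
  apply (K b Hb a Hab x (Entry_lt_succ _ _ _ Ex) y (Entry_lt_succ _ _ _ Ey));
    rewrite EntryB_iff; assumption.
Qed.

(* [<n, s>] is in [Y] when [s] is the sequence chosen at step [n + 1]. *)
Definition in_Y (z : N) : Prop :=
  exists n s h j, z = pair M n s /\ Hist h n /\ Entry M h n.+1 (pair M s j).

Definition last_termB (h n s : N) : Prop :=
  exists y, y < h.+1 /\ (EntryB h n.+1 y /\ exists j, j < y.+1 /\ y = pair M s j).
Definition in_Y_Sigma (z : N) : Prop :=
  exists h, exists n, n < z.+1 /\ exists s, s < z.+1 /\
    (z = pair M n s /\ (HistB h n /\ last_termB h n s)).
Definition in_Y_Pi (z : N) : Prop :=
  forall h, exists n, n < z.+1 /\ exists s, s < z.+1 /\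
    (z = pair M n s /\ (HistB h n -> last_termB h n s)).

Definition last_termP (h n s : nat) : lform :=
  PExb (lsucc (lvar h)) (fun y => PAnd (EntryP (lvar h) (lsucc (lvar n)) (lvar y))
    (PExb (lsucc (lvar y)) (fun j => PEq (lvar y) (lpair (lvar s) (lvar j))))).
#[local] Hint Unfold last_termP : builders.

Lemma last_termB_iff h n s : last_termB h n s <-> exists j, Entry M h n.+1 (pair M s j).
Proof.
  split.
  - intros [y [_ [Ey [j [_ ->]]]]]. rewrite EntryB_iff in Ey. eauto.
  - intros [j Ej]. exists (pair M s j). split; [eapply Entry_lt_succ; eauto|].
    split; [rewrite EntryB_iff; exact Ej|]. exists j. split; [apply lt_succ_r, pair_ge_r | reflexivity].
Qed.

Lemma pair_lt_succ n s : n < (pair M n s).+1 /\ s < (pair M n s).+1.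
Proof. split; apply lt_succ_r; [apply pair_ge_l | apply pair_ge_r]. Qed.

Lemma in_Y_Sigma_iff z : in_Y_Sigma z <-> in_Y z.
Proof.
  split.
  - intros [h [n [_ [s [_ [E [Hh Ht]]]]]]]. rewrite HistB_iff in Hh. rewrite last_termB_iff in Ht.
    destruct Ht as [j Hj]. exists n, s, h, j. auto.
  - intros [n [s [h [j [-> [Hh Hj]]]]]]. destruct (pair_lt_succ n s) as [Hn Hs].
    exists h, n. split; [exact Hn|]. exists s. split; [exact Hs|].
    rewrite HistB_iff, last_termB_iff. eauto.
Qed.

Lemma in_Y_Pi_iff z : in_Y_Pi z <-> in_Y z.
Proof.
  split.
  - intros H. destruct (H o0) as [n [_ [s [_ [E _]]]]].
    destruct (Hist_exists n) as [h Hh].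
    destruct (H h) as [n' [_ [s' [_ [E' Ht]]]]]. rewrite E in E'.
    apply pair_inj in E'. destruct E' as [<- <-].
    rewrite HistB_iff, last_termB_iff in Ht. destruct (Ht Hh) as [j Hj]. exists n, s, h, j. auto.
  - intros [n [s [h0 [j [-> [Hh0 Hj0]]]]]] h. destruct (pair_lt_succ n s) as [Hn Hs].
    exists n. split; [exact Hn|]. exists s. split; [exact Hs|]. split; [reflexivity|].
    rewrite HistB_iff, last_termB_iff. intros Hh. pose proof Hh as [Hl _].
    destruct (Entry_exists h _ n.+1 Hl (lt_succ_diag_r _)) as [y Hy].
    exists j. replace (pair M s j) with y; [exact Hy|].
    eapply (Hist_agree h h0 n n Hh Hh0); eauto; apply lt_succ_diag_r.
Qed.

Lemma Y_exists : exists Y, forall z, mem M z Y <-> in_Y z.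
Proof.
  apply (Delta01_comprehension M HM
    (PEx (fun h => PExb (lsucc (lpar 0)) (fun n => PExb (lsucc (lpar 0)) (fun s =>
       PAnd (PEq (lpar 0) (lpair (lvar n) (lvar s)))
            (PAnd (HistP (lvar h) (lvar n)) (last_termP h n s))))) O)
    (PAll (fun h => PExb (lsucc (lpar 0)) (fun n => PExb (lsucc (lpar 0)) (fun s =>
       PAnd (PEq (lpar 0) (lpair (lvar n) (lvar s)))
            (PImp (HistP (lvar h) (lvar n)) (last_termP h n s))))) O) e0 EX).
  - apply Sigma01_fex. solve_Delta0.
  - apply Pi01_fall. solve_Delta0.
  - intro z. rewrite <- in_Y_Sigma_iff.
    unfold in_Y_Sigma, last_termB, HistB, NextB, StepB, EntryB, LenB, RemB. unfold_builders. sat_congr.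
  - intro z. rewrite <- in_Y_Pi_iff.
    unfold in_Y_Pi, last_termB, HistB, NextB, StepB, EntryB, LenB, RemB. unfold_builders. sat_congr.
Qed.

Section Sequence.
Variable Y : Set2 M.
Hypothesis HY : forall z, mem M z Y <-> in_Y z.

Lemma Y_pair_iff n s : mem M (pair M n s) Y <-> exists h j, Hist h n /\ Entry M h n.+1 (pair M s j).
Proof.
  rewrite HY. split.
  - intros [n' [s' [h [j [E [Hh Hj]]]]]]. apply pair_inj in E. destruct E as [<- <-]. eauto.
  - intros [h [j [Hh Hj]]]. exists n, s, h, j. auto.
Qed.

Lemma Y_in_Hist n s h m : mem M (pair M n s) Y -> Hist h m -> n < m.+1 ->
  exists j, Entry M h n.+1 (pair M s j).
Proof.
  intros Hy Hh Hnm. rewrite Y_pair_iff in Hy. destruct Hy as [h0 [j [Hh0 Hj]]].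
  pose proof Hh as [Hl _]. assert (Hk : n.+1 < m.+1.+1) by (apply add_lt_mono_r, Hnm).
  destruct (Entry_exists h _ n.+1 Hl Hk) as [y Hy]. exists j.
  replace (pair M s j) with y; [exact Hy|].
  eapply (Hist_agree h h0 m n Hh Hh0); eauto. apply lt_succ_diag_r.
Qed.

Lemma Step_pair_inv x s j : Step x (pair M s j) -> mem M s X /\
  exists l i, Len M s l /\ x < l /\ i < l /\ Entry M s i o0 /\ mem M (pair M j i) F.
Proof.
  intros [t [j' [l [i [E [Ht [Hl [Hxl [Hi [Hi0 Fj]]]]]]]]]].
  apply pair_inj in E. destruct E as [<- <-]. split; [exact Ht|]. exists l, i. auto.
Qed.

Lemma Y_later_longer n m s t : n < m -> mem M (pair M n s) Y -> mem M (pair M m t) Y ->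
  exists j ls lt i, mem M s X /\ mem M t X /\ Len M s ls /\ Len M t lt /\ pair M s j < lt /\
    i < ls /\ Entry M s i o0 /\ mem M (pair M j i) F.
Proof.
  intros Hnm Hs Ht.
  destruct (Hist_exists m) as [h Hh].
  assert (Hnm1 : n < m.+1) by (eapply lt_trans; [exact Hnm | apply lt_succ_diag_r]).
  destruct (Y_in_Hist n s h m Hs Hh Hnm1) as [j Ej].
  destruct (Y_in_Hist m t h m Ht Hh (lt_succ_diag_r _)) as [jm Ejm].
  pose proof Hh as [_ [_ Hst]].
  destruct (Hst n Hnm1) as [xn [yn [_ [Eyn [Nn _]]]]]. rewrite (Entry_fun _ _ _ _ Eyn Ej) in Nn.
  destruct (Hst m (lt_succ_diag_r _)) as [xm [ym [Exm [Eym [Nm _]]]]].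
  rewrite (Entry_fun _ _ _ _ Eym Ejm) in Nm.
  destruct (Step_pair_inv _ _ _ Nn) as [HsX [ls [i [Hls [_ [Hi [Ei Fi]]]]]]].
  destruct (Step_pair_inv _ _ _ Nm) as [HtX [lt [_ [Hlt [Hxm _]]]]].
  exists j, ls, lt, i. do 4 (split; auto). split; [|auto].
  eapply le_lt_trans; [|exact Hxm].
  apply le_succ_l in Hnm. destruct Hnm as [Hnm| <-].
  - apply lt_le_incl. eapply (Hist_increasing h m Hh n.+1 m); eauto.
    eapply lt_trans; apply lt_succ_diag_r.
  - right. eapply Entry_fun; eauto.
Qed.

Lemma Y_good : GoodSeq M X Y.
Proof.
  assert (Hd : forall n m s t, n < m -> mem M (pair M n s) Y -> mem M (pair M m t) Y -> KB M s t).
  { intros n m s t Hnm Hs Ht.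
    destruct (Y_later_longer n m s t Hnm Hs Ht) as [j [ls [lt [i [? [? [? [? [? [? [? ?]]]]]]]]]]].
    eapply KB_of_misplaced_zero; eauto. }
  assert (Hex : forall n, exists s, mem M (pair M n s) Y).
  { intro n. destruct (Hist_exists n) as [h Hh]. pose proof Hh as [_ [_ Hst]].
    destruct (Hst n (lt_succ_diag_r _)) as [x [y [_ [Ey [[t [j [_ [_ [-> _]]]]] _]]]]].
    exists t. apply Y_pair_iff. eauto. }
  split; [split|split; [|split; [|split; [|split]]]].
  - exact Hex.
  - intros n s s' Hs Hs'. rewrite Y_pair_iff in Hs, Hs'.
    destruct Hs as [h1 [j1 [Hh1 E1]]]. destruct Hs' as [h2 [j2 [Hh2 E2]]].
    assert (E : pair M s j1 = pair M s' j2).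
    { eapply (Hist_agree h1 h2 n n); eauto; apply lt_succ_diag_r. }
    apply pair_inj in E. tauto.
  - intros n s Hs. rewrite Y_pair_iff in Hs. destruct Hs as [h [j [Hh Ej]]].
    pose proof Hh as [_ [_ Hst]].
    destruct (Hst n (lt_succ_diag_r _)) as [x [y [_ [Ey [Sy _]]]]].
    rewrite (Entry_fun _ _ _ _ Ey Ej) in Sy. apply Step_pair_inv in Sy. tauto.
  - intros n m s t ls lt Hnm Hs Ht Hls Hlt.
    destruct (Y_later_longer n m s t Hnm Hs Ht) as [j [ls' [lt' [_ [_ [_ [Hls' [Hlt' [Hp _]]]]]]]]].
    rewrite (Len_unique _ _ _ Hls Hls'), (Len_unique _ _ _ Hlt Hlt').
    apply (le_lt_trans _ s); [eapply Len_le; eauto|].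
    eapply le_lt_trans; [apply pair_ge_l | exact Hp].
  - intros n m s t Hnm Hs Ht.
    destruct (Y_later_longer n m s t Hnm Hs Ht) as [j [ls [lt [_ [HsX [HtX [Hls [Hlt [Hp _]]]]]]]]].
    assert (Hslt : s < lt) by (eapply le_lt_trans; [apply pair_ge_l | exact Hp]).
    exists ls, lt. split; [exact Hls|]. split; [exact Hlt|]. split.
    + apply lt_le_incl. eapply le_lt_trans; [eapply Len_le; eauto | exact Hslt].
    + apply (nonzero_entries_persist s t ls lt); auto.
  - intro k. destruct (Hex k.+1) as [s Hs]. destruct (Hex k.+1.+1) as [t Ht].
    exists k.+1, s, t. split; [apply lt_succ_diag_r|]. do 2 (split; auto).
    eapply Hd; eauto. apply lt_succ_diag_r.
  - exact Hd.
Qed.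

End Sequence.

Lemma good_sequence_exists : exists Y, GoodSeq M X Y.
Proof.
  destruct Y_exists as [Y HY]. exists Y. apply Y_good, HY.
Qed.

End Construction.
End Tree.
End Injection.
End Model.

Theorem lemma22 :
  forall M : L2str, RCA0 M ->
  forall F : Set2 M, InjFun M F ->
    RangeExists M F \/
    (forall X : Set2 M, Infinite M X -> Subset M X (InTf M F) ->
       exists Y : Set2 M, GoodSeq M X Y).
Proof.
  intros M HM F HF.
  destruct (classic (RangeExists M F)) as [HR|HR]; [left; exact HR | right].
  intros X HXinf HXsub.
  exact (good_sequence_exists M HM F F HF X HXinf HXsub HR).
Qed.
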